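(* Let $\mathcal W,\mathcal U,\mathcal V$ be finite, $\Phi_W$ and $\Phi_{U|W}$ codebook distributions and $\Phi_{V|W,U}$ a memoryless channel. Let $\mathcal B_1^{(n)}=\{w^n(j)\}_{j\in[2^{nR_1}]}$ have independent entries drawn from $\prod\Phi_W$, and $\mathcal B_2^{(n)}=\{u^n(w^n,k): w^n\in\mathcal B_1^{(n)},k\in[2^{nR_2}]\}$ independent entries with $u^n(w^n,k)\sim\prod_t\Phi_{U|W}(\cdot|w_t)$. With $J$ uniform on $[2^{nR_1}]$ and $K$ uniform on $[2^{nR_2}]$ independent, set $W^n=w^n(J)$, $U^n=u^n(W^n,K)$, and let $V^n$ be the output of $\prod\Phi_{V|W,U}$ on $(W^n,U^n)$, with distribution $P_{V^n}$; let $Q_{V^n}=\prod\Phi_V$ with $\Phi_V=\sum_{w,u}\Phi_W\Phi_{U|W}\Phi_{V|W,U}$. If $R_1>I(W;V)$, $R_2>I(W,U;V)-H(W)$ and $R_1+R_2>I(W,U;V)$, then $\lim_{n\to\infty}\mathbf E\|P_{V^n}-Q_{V^n}\|_{TV}=0$, with exponentially fast convergence in $n$.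
   Context: Information quantities in bits under $\Phi_W\Phi_{U|W}\Phi_{V|W,U}$; expectation over both random codebooks; total variation is half the $\ell_1$ distance. *)

From mathcomp Require Import all_boot.
From Stdlib Require Import Reals.
Set Implicit Arguments. Unset Strict Implicit. Unset Printing Implicit Defensive.
Open Scope R_scope.

Definition rsum (T : finType) (f : T -> R) : R := \big[Rplus/0]_(x : T) f x.
Definition rprod (T : finType) (f : T -> R) : R := \big[Rmult/1]_(x : T) f x.

Definition log2 (x : R) : R := ln x / ln 2.

Definition is_pmf (T : finType) (p : T -> R) : Prop :=
  (forall x, 0 <= p x) /\ rsum p = 1.

(* codebook size [2^{nR}] = {1,...,max(1, floor(2^{nR}))} *)
Definition cb_size (n : nat) (Rt : R) : nat :=
  Nat.max 1 (Z.to_nat (Int_part (Rpower 2 (INR n * Rt)))).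

Definition xlogr (x y : R) : R :=
  if Req_EM_T x 0 then 0 else x * log2 (x / y).

Section Info.
Variables (W U V : finType) (PhiW : W -> R) (PhiUW : W -> U -> R)
          (PhiVWU : W -> U -> V -> R).

Definition pWUV (w : W) (u : U) (v : V) : R := PhiW w * PhiUW w u * PhiVWU w u v.
Definition pWU (w : W) (u : U) : R := PhiW w * PhiUW w u.
Definition pWV (w : W) (v : V) : R := rsum (fun u => pWUV w u v).
Definition PhiV (v : V) : R := rsum (fun w => rsum (fun u => pWUV w u v)).

Definition entW : R := - rsum (fun w => xlogr (PhiW w) 1).
Definition mi_W_V : R :=
  rsum (fun w => rsum (fun v => xlogr (pWV w v) (PhiW w * PhiV v))).
Definition mi_WU_V : R :=
  rsum (fun w => rsum (fun u => rsum (fun v =>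
     xlogr (pWUV w u v) (pWU w u * PhiV v)))).

Section Code.
Variables (n M1 M2 : nat).
Notation seqW := {ffun 'I_n -> W}.
Notation seqU := {ffun 'I_n -> U}.
Notation seqV := {ffun 'I_n -> V}.
(* B1 = {w^n(j)}_j ; B2 = {u^n(w^n,k)} indexed by sequences w^n and k
   (only the entries at w^n in B1 are used) *)
Definition Cb1 := {ffun 'I_M1 -> seqW}.
Definition Cb2 := {ffun seqW -> {ffun 'I_M2 -> seqU}}.

Definition probB1 (B1 : Cb1) : R :=
  rprod (fun j => rprod (fun t => PhiW (B1 j t))).
Definition probB2 (B2 : Cb2) : R :=
  rprod (fun wn : seqW => rprod (fun k => rprod (fun t => PhiUW (wn t) (B2 wn k t)))).

Definition PVn (B1 : Cb1) (B2 : Cb2) (v : seqV) : R :=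
  / INR (M1 * M2) * rsum (fun j => rsum (fun k =>
     rprod (fun t => PhiVWU (B1 j t) (B2 (B1 j) k t) (v t)))).
Definition QVn (v : seqV) : R := rprod (fun t => PhiV (v t)).

Definition tv (B1 : Cb1) (B2 : Cb2) : R :=
  / 2 * rsum (fun v : seqV => Rabs (PVn B1 B2 v - QVn v)).

Definition expected_tv : R :=
  rsum (fun B1 : Cb1 => rsum (fun B2 : Cb2 => probB1 B1 * probB2 B2 * tv B1 B2)).
End Code.
End Info.

From HB Require Import structures.
From Pilot Require Import Defs.
From mathcomp Require Import all_boot.
From Stdlib Require Import Reals Lra Classical ZArith.
Set Implicit Arguments. Unset Strict Implicit. Unset Printing Implicit Defensive.
Open Scope R_scope.

(* Fix a block length n, codebook sizes M1, M2 and a threshold K > 0.  Writing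
   Gam(v|w,u) for the n-letter channel and GamW(v|w) for its average over u^n,
     P_{V^n}(v) - Q_{V^n}(v)
       = 1/M1 sum_j [1/M2 sum_k Gam(v|w_j,u_jk) - GamW(v|w_j)]
       + 1/M1 sum_j [GamW(v|w_j) - Q_{V^n}(v)].
   Each bracket is a sum of independent centred terms.  Truncating the
   likelihoods where they exceed M1 M2 Q/K, M2 Q/(K pW) resp. M1 Q/K splits it
   into a "typical" part, whose second moment is O(1/K) so that Cauchy-Schwarz
   bounds its expected absolute value by O(K^{-1/2}) (lemma [expected_tv_le]),
   and an "atypical" remainder whose expected absolute value is at most twice
   the probability mass of an atypical event.  A Chernoff bound makes these
   masses decay like rho^n with rho < 1 exactly under the three rate
   conditions.  Choosing K = exp(n g) gives an exponential bound. *)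

(* Stdlib's reals as MathComp monoids, so that the bigop library applies to
   the sums [rsum] and products [rprod] of the definitions. *)
HB.instance Definition _ := Monoid.isComLaw.Build R 0 Rplus
  (fun x y z => esym (Rplus_assoc x y z)) Rplus_comm Rplus_0_l.
HB.instance Definition _ := Monoid.isComLaw.Build R 1 Rmult
  (fun x y z => esym (Rmult_assoc x y z)) Rmult_comm Rmult_1_l.
HB.instance Definition _ := Monoid.isMulLaw.Build R 0 Rmult Rmult_0_l Rmult_0_r.
HB.instance Definition _ := Monoid.isAddLaw.Build R Rmult Rplus
  Rmult_plus_distr_r Rmult_plus_distr_l.

Section Sums.
Variable T : finType.
Implicit Types f g : T -> R.

Lemma rsum_ext f g : (forall x, f x = g x) -> rsum f = rsum g.
Proof. by move=> H; rewrite /rsum; apply: eq_bigr => x _; apply: H. Qed.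

Lemma rprod_ext f g : (forall x, f x = g x) -> rprod f = rprod g.
Proof. by move=> H; rewrite /rprod; apply: eq_bigr => x _; apply: H. Qed.

Lemma rsum_le f g : (forall x, f x <= g x) -> rsum f <= rsum g.
Proof.
move=> H; rewrite /rsum; apply: (big_ind2 (fun a b => a <= b)) => //.
- lra.
- by move=> ????; apply: Rplus_le_compat.
Qed.

Lemma rsum_ge0 f : (forall x, 0 <= f x) -> 0 <= rsum f.
Proof.
move=> H; rewrite /rsum; apply: (big_ind (fun a => 0 <= a)) => //.
- lra.
- by move=> ???; lra.
Qed.

Lemma rsum_plus f g : rsum (fun x => f x + g x) = rsum f + rsum g.
Proof. exact: big_split. Qed.

Lemma rsum_scal c f : rsum (fun x => c * f x) = c * rsum f.
Proof. by rewrite /rsum big_distrr. Qed.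

Lemma rsum_scalr c f : rsum (fun x => f x * c) = rsum f * c.
Proof. by rewrite /rsum big_distrl. Qed.

Lemma rsum0 : rsum (fun _ : T => 0) = 0.
Proof. by rewrite /rsum big1. Qed.

Lemma rsum_const c : rsum (fun _ : T => c) = INR #|T| * c.
Proof.
rewrite /rsum big_const; elim: #|T| => [|k IH] /=; first ring.
rewrite IH; case: k {IH} => [|k] /=; ring.
Qed.

Lemma rsum_minus f g : rsum (fun x => f x - g x) = rsum f - rsum g.
Proof.
rewrite /Rminus rsum_plus; congr (_ + _).
have -> : - rsum g = (-1) * rsum g by ring.
by rewrite -rsum_scal; apply: rsum_ext => x; ring.
Qed.

Lemma rsum_abs f : Rabs (rsum f) <= rsum (fun x => Rabs (f x)).
Proof.
rewrite /rsum; apply: (big_ind2 (fun a b => Rabs a <= b)).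
- rewrite Rabs_R0; lra.
- move=> a b c d H1 H2; apply: Rle_trans (Rabs_triang _ _) _; lra.
- by move=> x _; lra.
Qed.

Lemma rsum_pred1 (a : T) f : rsum (fun x => if x == a then f x else 0) = f a.
Proof. by rewrite /rsum (bigD1 a) //= eqxx big1 ?Rplus_0_r // => x /negbTE ->. Qed.

Lemma rsum_pred1' (a : T) f : rsum (fun x => if a == x then f x else 0) = f a.
Proof. by rewrite -(rsum_pred1 a); apply: rsum_ext => x; rewrite eq_sym. Qed.

Lemma rsum_term f (a : T) : (forall x, 0 <= f x) -> f a <= rsum f.
Proof.
move=> H; rewrite /rsum (bigD1 a) //=.
have : 0 <= \big[Rplus/0]_(i | i != a) f i.
  by apply: (big_ind (fun a => 0 <= a)) => //; [lra | move=> ???; lra].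
lra.
Qed.

Lemma rprod_ge0 f : (forall x, 0 <= f x) -> 0 <= rprod f.
Proof.
move=> H; rewrite /rprod; apply: (big_ind (fun a => 0 <= a)) => //.
- lra.
- by move=> ???; apply: Rmult_le_pos.
Qed.

Lemma rprod_gt0 f : (forall x, 0 < f x) -> 0 < rprod f.
Proof.
move=> H; rewrite /rprod; apply: (big_ind (fun a => 0 < a)) => //.
- lra.
- by move=> ???; apply: Rmult_lt_0_compat.
Qed.

Lemma rprod_mult f g : rprod (fun x => f x * g x) = rprod f * rprod g.
Proof. exact: big_split. Qed.

Lemma rprod_eq0 f (a : T) : f a = 0 -> rprod f = 0.
Proof. by move=> H; rewrite /rprod (bigD1 a) //= H Rmult_0_l. Qed.

Lemma rprod1 : rprod (fun _ : T => 1) = 1.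
Proof. by rewrite /rprod big1. Qed.

Lemma rprod_single (a : T) f : (forall i, i != a -> f i = 1) -> rprod f = f a.
Proof. by move=> H; rewrite /rprod (bigD1 a) //= big1 ?Rmult_1_r. Qed.

Lemma rprod_exp f : rprod (fun x => exp (f x)) = exp (rsum f).
Proof.
rewrite /rprod /rsum; apply: (big_ind2 (fun a b => a = exp b)).
- by rewrite exp_0.
- by move=> a b c d -> ->; rewrite exp_plus.
- done.
Qed.

Lemma rprod_ln f : (forall x, 0 < f x) -> rprod f = exp (rsum (fun x => ln (f x))).
Proof. by move=> H; rewrite -rprod_exp; apply: rprod_ext => x; rewrite exp_ln. Qed.

Lemma rsum_swap (T' : finType) (F : T -> T' -> R) :
  rsum (fun x => rsum (fun y => F x y)) = rsum (fun y => rsum (fun x => F x y)).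
Proof. exact: exchange_big. Qed.

Lemma rsum_sq f : rsum f ^ 2 = rsum (fun x => rsum (fun y => f x * f y)).
Proof. by rewrite /= Rmult_1_r /rsum big_distrlr. Qed.

End Sums.

Lemma le_div_of_mul_le a b K : 0 < K -> a * K <= b -> a <= b / K.
Proof.
move=> hK h; apply: (Rmult_le_reg_r K) => //.
by rewrite (_ : b / K * K = b) //; field; lra.
Qed.

Lemma abs_sub_le a b : 0 <= a -> 0 <= b -> Rabs (a - b) <= a + b.
Proof. by move=> ha hb; apply: Rabs_le; split; lra. Qed.

Lemma rsum_const_ord n c : rsum (fun _ : 'I_n => c) = INR n * c.
Proof. by rewrite rsum_const card_ord. Qed.

Lemma rprod_const_ord n c : rprod (fun _ : 'I_n => c) = c ^ n.
Proof. by rewrite /rprod big_const_ord; elim: n => //= n ->. Qed.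

Lemma rsum_pair (X Y : finType) (F : X -> Y -> R) :
  rsum (fun x : X * Y => F x.1 x.2) = rsum (fun x => rsum (fun y => F x y)).
Proof. by rewrite /rsum pair_big. Qed.

Lemma rsum_triple (X Y Z : finType) (F : X -> Y -> Z -> R) :
  rsum (fun x : X * (Y * Z) => F x.1 x.2.1 x.2.2)
  = rsum (fun x => rsum (fun y => rsum (fun z => F x y z))).
Proof.
rewrite (rsum_pair (fun x (yz : Y * Z) => F x yz.1 yz.2)); apply: rsum_ext => x.
exact: (rsum_pair (fun y z => F x y z)).
Qed.

Lemma rsum_ffun_prod (I J : finType) (F : I -> J -> R) :
  rsum (fun f : {ffun I -> J} => rprod (fun i => F i (f i))) = rprod (fun i => rsum (F i)).
Proof. by rewrite /rprod /rsum; symmetry; exact: bigA_distr_bigA. Qed.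

(* Product distributions: a random function [B : {ffun I -> T}] with
   independent coordinates [B i ~ p i], of weight [rprod (fun i => p i (B i))]. *)
Section ProductDistribution.
Variables (I T : finType) (p : I -> T -> R).

Lemma prod_mean_factor (h : I -> T -> R) :
  rsum (fun B : {ffun I -> T} => rprod (fun i => p i (B i)) * rprod (fun i => h i (B i)))
  = rprod (fun i => rsum (fun x => p i x * h i x)).
Proof. by rewrite -rsum_ffun_prod; apply: rsum_ext => B; rewrite rprod_mult. Qed.

Hypothesis hp : forall i, rsum (p i) = 1.

Let rsum_p_one (i : I) : rsum (fun x => p i x * 1) = 1.
Proof. by rewrite -[RHS](hp i); apply: rsum_ext => x; ring. Qed.

Lemma prod_pmf_sum1 : rsum (fun B : {ffun I -> T} => rprod (fun i => p i (B i))) = 1.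
Proof.
transitivity (rprod (fun i : I => rsum (fun x => p i x * 1))).
  rewrite -(prod_mean_factor (fun _ _ => 1)).
  by apply: rsum_ext => B; rewrite rprod1 Rmult_1_r.
by rewrite (rprod_ext rsum_p_one) rprod1.
Qed.

Lemma prod_pmf_marg1 (a : I) (f : T -> R) :
  rsum (fun B : {ffun I -> T} => rprod (fun i => p i (B i)) * f (B a))
  = rsum (fun x => p a x * f x).
Proof.
have := prod_mean_factor (fun i x => if i == a then f x else 1).
rewrite (@rprod_single _ a); last by move=> i /negbTE ->; exact: rsum_p_one.
rewrite eqxx => <-; apply: rsum_ext => B; congr (_ * _).
by rewrite (@rprod_single _ a) ?eqxx // => i /negbTE ->.
Qed.

Lemma prod_pmf_marg2 (a b : I) (f g : T -> R) : a != b ->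
  rsum (fun B : {ffun I -> T} => rprod (fun i => p i (B i)) * (f (B a) * g (B b)))
  = rsum (fun x => p a x * f x) * rsum (fun x => p b x * g x).
Proof.
move=> ab.
have two F : (forall i, i != a -> i != b -> F i = 1) -> rprod F = F a * F b.
  move=> HF; rewrite /rprod (bigD1 a) // (bigD1 b) /=; last by rewrite eq_sym.
  by rewrite big1 ?Rmult_1_r ?Rmult_assoc // => i /andP [ib ia]; exact: HF.
have := prod_mean_factor (fun i x => (if i == a then f x else 1) * (if i == b then g x else 1)).
rewrite two; last first.
  by move=> i /negbTE -> /negbTE ->; rewrite -[RHS](rsum_p_one i); apply: rsum_ext => x; ring.
rewrite eqxx (negbTE ab) eq_sym (negbTE ab) eqxx => H.
transitivity (rsum (fun x => p a x * (f x * 1)) * rsum (fun x => p b x * (1 * g x))); last first.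
  by congr (_ * _); apply: rsum_ext => x; ring.
rewrite -H; apply: rsum_ext => B; congr (_ * _).
rewrite two ?eqxx ?(negbTE ab) // 1?eq_sym ?(negbTE ab); first ring.
by move=> i /negbTE -> /negbTE ->; ring.
Qed.

End ProductDistribution.

Lemma indep_sum_second_moment (I T J : finType) (p : I -> T -> R)
  (hp : forall i, rsum (p i) = 1) (Y : I -> T -> R)
  (hY : forall i, rsum (fun x => p i x * Y i x) = 0) (a : J -> I) :
  rsum (fun B : {ffun I -> T} => rprod (fun i => p i (B i)) *
           (rsum (fun j => Y (a j) (B (a j)))) ^ 2)
  = rsum (fun j => rsum (fun j' => if a j == a j'
             then rsum (fun x => p (a j) x * Y (a j) x ^ 2) else 0)).
Proof.
transitivity (rsum (fun j => rsum (fun j' => rsum (fun B : {ffun I -> T} =>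
   rprod (fun i => p i (B i)) * (Y (a j) (B (a j)) * Y (a j') (B (a j'))))))).
  transitivity (rsum (fun B : {ffun I -> T} => rsum (fun j => rsum (fun j' =>
    rprod (fun i => p i (B i)) * (Y (a j) (B (a j)) * Y (a j') (B (a j'))))))).
    apply: rsum_ext => B; rewrite rsum_sq -rsum_scal.
    by apply: rsum_ext => j; rewrite -rsum_scal.
  by rewrite [LHS]rsum_swap; apply: rsum_ext => j; rewrite [LHS]rsum_swap.
apply: rsum_ext => j; apply: rsum_ext => j'.
case: eqP => [e|ne].
  rewrite -e (prod_pmf_marg1 hp (a j) (fun x => Y (a j) x * Y (a j) x)).
  by apply: rsum_ext => x; rewrite /= Rmult_1_r.
by rewrite (prod_pmf_marg2 hp) ?hY ?Rmult_0_l //; apply/eqP.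
Qed.

Lemma centred_mean0 (T : finType) (p f : T -> R) : rsum p = 1 ->
  rsum (fun x => p x * (f x - rsum (fun y => p y * f y))) = 0.
Proof.
move=> h; set m := rsum (fun y => p y * f y).
transitivity (rsum (fun x => p x * f x) + (- m) * rsum p).
  by rewrite -rsum_scal -rsum_plus; apply: rsum_ext => x; ring.
by rewrite h -/m; ring.
Qed.

Lemma variance_eq (T : finType) (p f : T -> R) : rsum p = 1 ->
  rsum (fun x => p x * (f x - rsum (fun y => p y * f y)) ^ 2)
  = rsum (fun x => p x * f x ^ 2) - rsum (fun y => p y * f y) ^ 2.
Proof.
move=> h; set m := rsum (fun y => p y * f y).
transitivity (rsum (fun x => p x * f x ^ 2 + (-2 * m) * (p x * f x) + (m * m) * p x)).
  by apply: rsum_ext => x; ring.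
by rewrite !rsum_plus !rsum_scal -/m h; ring.
Qed.

Lemma variance_le (T : finType) (p f : T -> R) : rsum p = 1 ->
  rsum (fun x => p x * (f x - rsum (fun y => p y * f y)) ^ 2) <= rsum (fun x => p x * f x ^ 2).
Proof. by move=> h; rewrite variance_eq //; have := pow2_ge_0 (rsum (fun y => p y * f y)); lra. Qed.

Lemma iid_sum_variance_le (I T : finType) (p f : T -> R) : rsum p = 1 ->
  rsum (fun B : {ffun I -> T} => rprod (fun i => p (B i)) *
     (rsum (fun i => f (B i) - rsum (fun y => p y * f y))) ^ 2)
  <= INR #|I| * rsum (fun x => p x * f x ^ 2).
Proof.
move=> h; set m := rsum (fun y => p y * f y).
rewrite (@indep_sum_second_moment I T I (fun _ => p) (fun _ => h) (fun _ x => f x - m)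
  (fun _ => centred_mean0 f h) (fun i : I => i)) /=.
rewrite (rsum_ext (g := fun _ => rsum (fun x => p x * (f x - m) ^ 2))); last first.
  by move=> j; rewrite (rsum_pred1' j (fun _ => rsum (fun x => p x * (f x - m) ^ 2))).
rewrite rsum_const; apply: Rmult_le_compat_l; [exact: pos_INR | exact: variance_le].
Qed.

Lemma iid_collision_mean (I T : finType) (p : T -> R) (h : T -> R) (j j' : I) :
  rsum p = 1 -> j != j' ->
  rsum (fun B : {ffun I -> T} => rprod (fun i => p (B i)) *
    (if B j == B j' then h (B j) else 0)) = rsum (fun x => p x * p x * h x).
Proof.
move=> hp1 ne; have hp1' : forall i : I, rsum ((fun _ => p) i) = 1 by [].
have pair_eq (B : {ffun I -> T}) : (if B j == B j' then h (B j) else 0)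
   = rsum (fun x => (if B j == x then 1 else 0) * ((if B j' == x then 1 else 0) * h x)).
  rewrite (rsum_ext (g := fun x => if B j == x then (if B j' == x then 1 else 0) * h x else 0)).
    by rewrite rsum_pred1' [B j' == _]eq_sym; case: eqP => _; ring.
  by move=> x; case: eqP => _; ring.
rewrite (rsum_ext (g := fun B : {ffun I -> T} => rsum (fun x =>
   rprod (fun i => p (B i)) * ((if B j == x then 1 else 0) *
     ((if B j' == x then 1 else 0) * h x))))); last first.
  by move=> B; rewrite pair_eq rsum_scal.
rewrite rsum_swap; apply: rsum_ext => x.
rewrite (@prod_pmf_marg2 I T (fun _ => p) hp1' j j' (fun y => if y == x then 1 else 0)
  (fun y => (if y == x then 1 else 0) * h x)) //.
rewrite (rsum_ext (g := fun y => if y == x then p y else 0)); last first.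
  by move=> y; case: eqP => _; ring.
rewrite (rsum_ext (f := fun y => p y * ((if y == x then 1 else 0) * h x))
  (g := fun y => if y == x then p y * h x else 0)); last by move=> y; case: eqP => _; ring.
by rewrite (rsum_pred1 x p) (rsum_pred1 x (fun y => p y * h x)); ring.
Qed.

(* Mean number of collisions of an i.i.d. sample, weighted by [h]: diagonal
   pairs contribute #|I| E h, off-diagonal pairs #|I|^2 sum p^2 h. *)
Lemma collision_sum_le (I T : finType) (p h : T -> R) : (forall x, 0 <= p x) ->
  rsum p = 1 -> (forall x, 0 <= h x) ->
  rsum (fun B : {ffun I -> T} => rprod (fun i => p (B i)) *
     rsum (fun j => rsum (fun j' => if B j == B j' then h (B j) else 0)))
  <= INR #|I| * rsum (fun x => p x * h x)
     + INR #|I| * INR #|I| * rsum (fun x => p x * p x * h x).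
Proof.
move=> hp0 hp1 hh.
set A := rsum (fun x => p x * h x); set Bq := rsum (fun x => p x * p x * h x).
have hp1' : forall i : I, rsum ((fun _ => p) i) = 1 by [].
have hBq : 0 <= Bq.
  by apply: rsum_ge0 => x; apply: Rmult_le_pos => //; exact: Rmult_le_pos.
transitivity (rsum (fun j : I => rsum (fun j' : I => rsum (fun B : {ffun I -> T} =>
   rprod (fun i => p (B i)) * (if B j == B j' then h (B j) else 0))))).
  right; transitivity (rsum (fun B : {ffun I -> T} => rsum (fun j => rsum (fun j' =>
     rprod (fun i => p (B i)) * (if B j == B j' then h (B j) else 0))))).
    by apply: rsum_ext => B; rewrite -rsum_scal; apply: rsum_ext => j; rewrite -rsum_scal.
  by rewrite [LHS]rsum_swap; apply: rsum_ext => j; rewrite [LHS]rsum_swap.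
apply: Rle_trans (rsum_le (g := fun j => A + INR #|I| * Bq) _) _; last first.
  by rewrite rsum_const; right; ring.
move=> j.
apply: Rle_trans (rsum_le (g := fun j' => (if j == j' then A else 0) + Bq) _) _; last first.
  by rewrite rsum_plus rsum_pred1' rsum_const; right.
move=> j'; case: eqP => [<-|ne].
  rewrite (rsum_ext (g := fun B : {ffun I -> T} => rprod (fun i => p (B i)) * h (B j))).
    by rewrite (prod_pmf_marg1 hp1' j h) -/A; lra.
  by move=> B; rewrite eqxx.
rewrite Rplus_0_l (@iid_collision_mean I T p h j j' hp1); last by apply/eqP.
rewrite -/Bq; lra.
Qed.

Lemma mean_le_sqrt_second_moment (T : finType) (p f : T -> R) :
  (forall x, 0 <= p x) -> rsum p = 1 ->
  rsum (fun x => p x * f x) <= sqrt (rsum (fun x => p x * f x ^ 2)).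
Proof.
move=> hp0 hp1; set m := rsum (fun x => p x * f x).
have hvar : 0 <= rsum (fun x => p x * (f x - m) ^ 2).
  by apply: rsum_ge0 => x; apply: Rmult_le_pos => //; apply: pow2_ge_0.
rewrite variance_eq // -/m in hvar.
case: (Rle_lt_dec m 0) => hm; first exact: Rle_trans hm (sqrt_pos _).
by rewrite -(sqrt_pow2 m); [apply: sqrt_le_1_alt; lra | lra].
Qed.

Lemma mean_abs_le_sqrt_second_moment (T : finType) (p f : T -> R) :
  (forall x, 0 <= p x) -> rsum p = 1 ->
  rsum (fun x => p x * Rabs (f x)) <= sqrt (rsum (fun x => p x * f x ^ 2)).
Proof.
move=> h1 h2; apply: Rle_trans (mean_le_sqrt_second_moment (fun x => Rabs (f x)) h1 h2) _.
by right; congr sqrt; apply: rsum_ext => x; rewrite pow2_abs.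
Qed.

Lemma mean_of_sum (A J : finType) (p : A -> R) (c : R) (f : A -> J -> R) :
  rsum (fun a => p a * (c * rsum (fun j => f a j)))
  = c * rsum (fun j => rsum (fun a => p a * f a j)).
Proof.
transitivity (rsum (fun a => rsum (fun j => c * (p a * f a j)))).
  by apply: rsum_ext => a; rewrite -!rsum_scal; apply: rsum_ext => j; ring.
by rewrite rsum_swap -rsum_scal; apply: rsum_ext => j; rewrite -rsum_scal.
Qed.

Lemma mean_of_double_sum (A J L : finType) (p : A -> R) (c c' : R) (f : A -> J -> L -> R) :
  rsum (fun a => p a * (c * rsum (fun j => c' * rsum (fun k => f a j k))))
  = c * rsum (fun j => c' * rsum (fun k => rsum (fun a => p a * f a j k))).
Proof.
rewrite mean_of_sum; congr (_ * _); apply: rsum_ext => j.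
by rewrite -(Rmult_1_l (rsum (fun a => _))) mean_of_sum Rmult_1_l.
Qed.

(* A variable with c f^2 <= L f pointwise (e.g. f truncated at level L / c)
   has c E f^2 <= L E f. *)
Lemma truncated_second_moment_le (T : finType) (p f : T -> R) (c L : R) :
  (forall x, 0 <= p x) -> (forall x, c * f x ^ 2 <= f x * L) ->
  c * rsum (fun x => p x * f x ^ 2) <= L * rsum (fun x => p x * f x).
Proof.
move=> hp hf; rewrite -!rsum_scal; apply: rsum_le => x.
have := hf x; have := hp x; nra.
Qed.

Lemma iid_abs_dev_le (I T : finType) (p f : T -> R) : (forall x, 0 <= p x) -> rsum p = 1 ->
  (forall x, 0 <= f x) -> (0 < #|I|)%nat ->
  rsum (fun B : {ffun I -> T} => rprod (fun i => p (B i)) *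
     Rabs (/ INR #|I| * rsum (fun i => f (B i) - rsum (fun y => p y * f y))))
  <= 2 * rsum (fun y => p y * f y).
Proof.
move=> hp0 hp1 hf hI; set m := rsum (fun y => p y * f y).
have hp1' : forall i : I, rsum ((fun _ => p) i) = 1 by [].
have hN : 0 < INR #|I| by apply: lt_0_INR; apply/ltP.
have hiN : 0 <= / INR #|I| by apply: Rlt_le; apply: Rinv_0_lt_compat.
have hm : 0 <= m by apply: rsum_ge0 => x; apply: Rmult_le_pos.
apply: Rle_trans (rsum_le (g := fun B : {ffun I -> T} => rprod (fun i => p (B i)) *
   (/ INR #|I| * rsum (fun i => f (B i) + m))) _) _.
  move=> B; apply: Rmult_le_compat_l; first by apply: rprod_ge0.
  rewrite Rabs_mult (Rabs_pos_eq _ hiN); apply: Rmult_le_compat_l => //.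
  apply: Rle_trans (rsum_abs _) _; apply: rsum_le => i.
  by apply: abs_sub_le.
rewrite mean_of_sum (rsum_ext (g := fun _ => 2 * m)); last first.
  move=> i; rewrite (prod_pmf_marg1 hp1' i (fun x => f x + m)).
  rewrite (rsum_ext (g := fun x => p x * f x + m * p x)); last by move=> x; ring.
  by rewrite rsum_plus rsum_scal hp1 -/m; ring.
by rewrite rsum_const; right; field; lra.
Qed.

Lemma exp_le_quadratic z : z <= 1/2 -> exp z <= 1 + z + 2 * z ^ 2.
Proof.
move=> hz.
have h1 : 1 - z <= exp (- z).
  case: (Req_dec z 0) => [->|nz]; first by rewrite Ropp_0 exp_0; lra.
  by have := exp_ineq1 (- z); lra.
have e : exp z * exp (- z) = 1 by rewrite -exp_plus Rplus_opp_r exp_0.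
have hpos : 0 < exp z := exp_pos z.
have h2 : exp z * (1 - z) <= 1 by nra.
have h3 : 1 <= (1 - z) * (1 + z + 2 * z ^ 2) by nra.
nra.
Qed.

Lemma exp_moment_lt1 (T : finType) (p y : T -> R) : (forall x, 0 <= p x) -> rsum p = 1 ->
  rsum (fun x => p x * y x) < 0 ->
  exists lam, 0 < lam /\ 0 <= rsum (fun x => p x * exp (lam * y x)) < 1.
Proof.
move=> hp0 hp1 hm.
set m := rsum (fun x => p x * y x) in hm.
set S := rsum (fun x => p x * y x ^ 2).
set Y := rsum (fun x => Rabs (y x)).
have hS : 0 <= S by apply: rsum_ge0 => x; apply: Rmult_le_pos => //; apply: pow2_ge_0.
have hY : 0 <= Y by apply: rsum_ge0 => x; apply: Rabs_pos.
have hyY x : Rabs (y x) <= Y.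
  by apply: (@rsum_term _ (fun x => Rabs (y x)) x) => ?; apply: Rabs_pos.
set lam := Rmin (/ (2 * (Y + 1))) (- m / (2 * (2 * S + 1))).
have l1 : lam * (2 * (Y + 1)) <= 1.
  apply: Rle_trans (Rmult_le_compat_r _ _ _ _ (Rmin_l _ _)) _; first lra.
  by right; field; lra.
have l2 : lam * (2 * (2 * S + 1)) <= - m.
  apply: Rle_trans (Rmult_le_compat_r _ _ _ _ (Rmin_r _ _)) _; first lra.
  by right; field; lra.
have lpos : 0 < lam.
  by apply: Rmin_pos; [apply: Rinv_0_lt_compat | apply: Rdiv_lt_0_compat]; lra.
exists lam; split => //; split.
  by apply: rsum_ge0 => x; apply: Rmult_le_pos => //; exact: Rlt_le (exp_pos _).
have hz x : lam * y x <= 1/2 by have := hyY x; have := Rle_abs (y x); nra.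
apply: Rle_lt_trans (rsum_le (g := fun x => p x * (1 + lam * y x + 2 * (lam * y x) ^ 2)) _) _.
  by move=> x; apply: Rmult_le_compat_l => //; exact: exp_le_quadratic.
have -> : rsum (fun x => p x * (1 + lam * y x + 2 * (lam * y x) ^ 2))
     = rsum p + lam * m + 2 * lam ^ 2 * S.
  by rewrite -!rsum_scal -!rsum_plus; apply: rsum_ext => x; ring.
rewrite hp1; nra.
Qed.

Definition ind_lt (x y : R) : R := if Rlt_dec x y then 1 else 0.

Lemma ind_lt_ge0 x y : 0 <= ind_lt x y.
Proof. by rewrite /ind_lt; case: Rlt_dec => h /=; lra. Qed.

Lemma product_markov n (p a d : 'I_n -> R) c lam b :
  (forall t, 0 <= p t) -> (forall t, 0 < p t -> 0 < a t /\ 0 < d t) -> 0 < c -> 0 < lam ->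
  rprod p * ind_lt (c * exp (INR n * b) * rprod d) (rprod a)
  <= exp (- lam * ln c) * rprod (fun t => p t * exp (lam * (ln (a t) - ln (d t) - b))).
Proof.
move=> hp had hc hl.
have hR : 0 <= exp (- lam * ln c) * rprod (fun t => p t * exp (lam * (ln (a t) - ln (d t) - b))).
  apply: Rmult_le_pos; first exact: Rlt_le (exp_pos _).
  by apply: rprod_ge0 => t; apply: Rmult_le_pos => //; exact: Rlt_le (exp_pos _).
case: (classic (exists t, p t = 0)) => [[t ht]|hn].
  by rewrite (rprod_eq0 ht) Rmult_0_l.
have hpp t : 0 < p t by case: (hp t) => // e; exfalso; apply: hn; exists t.
rewrite /ind_lt; case: Rlt_dec => ev; last by rewrite Rmult_0_r.
rewrite Rmult_1_r rprod_mult rprod_exp.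
rewrite (rprod_ln (f := a)) ?(rprod_ln (f := d)) in ev; try by move=> t; case: (had t (hpp t)).
rewrite -{1}(exp_ln c hc) -!exp_plus in ev; move/exp_lt_inv: ev => ev.
have -> : rsum (fun t => lam * (ln (a t) - ln (d t) - b)) =
   lam * (rsum (fun t => ln (a t)) - rsum (fun t => ln (d t)) - INR n * b).
  by rewrite -rsum_const_ord -!rsum_minus -rsum_scal; apply: rsum_ext => t; ring.
have hpr : 0 < rprod p by apply: rprod_gt0.
rewrite -Rmult_assoc (Rmult_comm (exp _)) Rmult_assoc -exp_plus.
rewrite -{1}(Rmult_1_r (rprod p)); apply: Rmult_le_compat_l; first lra.
rewrite -exp_0; left; apply: exp_increasing; nra.
Qed.

Definition exp_small (f : nat -> R) : Prop :=
  exists c C, 0 < c /\ forall n, f n <= C * exp (- c * INR n).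

Lemma exp_decreasing_rate c c' n : c <= c' -> exp (- c' * INR n) <= exp (- c * INR n).
Proof.
move=> h; have := pos_INR n => hn.
case: (Req_dec (- c' * INR n) (- c * INR n)) => e; first by rewrite e; lra.
by left; apply: exp_increasing; nra.
Qed.

Lemma exp_small_exp d : 0 < d -> exp_small (fun n => exp (- d * INR n)).
Proof. by move=> hd; exists d, 1; split => // n; rewrite Rmult_1_l; right. Qed.

Lemma exp_small_pow rho : 0 <= rho < 1 -> exp_small (fun n => rho ^ n).
Proof.
move=> [h0 h1]; set r := Rmax rho (1/2).
have hr0 : 0 < r by apply: Rlt_le_trans (Rmax_r _ _); lra.
have hr1 : r < 1 by apply: Rmax_lub_lt; lra.
exists (- ln r), 1; split.
  have : ln r < 0 by rewrite -ln_1; apply: ln_increasing.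
  lra.
move=> n; rewrite Rmult_1_l.
apply: Rle_trans (pow_incr rho r n _) _; first by split => //; exact: Rmax_l.
by rewrite -Rpower_pow // /Rpower; right; congr exp; ring.
Qed.

Lemma exp_small_plus f g : exp_small f -> exp_small g -> exp_small (fun n => f n + g n).
Proof.
move=> [c [C [hc hf]]] [d [D [hd hg]]].
exists (Rmin c d), (Rabs C + Rabs D); split; first exact: Rmin_pos.
move=> n; have e1 := exp_decreasing_rate n (Rmin_l c d).
have e2 := exp_decreasing_rate n (Rmin_r c d).
have := hf n; have := hg n; have := exp_pos (- c * INR n); have := exp_pos (- d * INR n).
have := Rle_abs C; have := Rle_abs D; have := Rabs_pos C; have := Rabs_pos D.
nra.
Qed.

Lemma exp_small_scal k f : 0 <= k -> exp_small f -> exp_small (fun n => k * f n).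
Proof.
move=> hk [c [C [hc hf]]]; exists c, (k * C); split => // n.
by rewrite Rmult_assoc; apply: Rmult_le_compat_l.
Qed.

Lemma exp_small_le f g : (forall n, f n <= g n) -> exp_small g -> exp_small f.
Proof. by move=> h [c [C [hc hg]]]; exists c, C; split => // n; apply: Rle_trans (hg n). Qed.

Lemma exp_small_cv f : (forall n, 0 <= f n) -> exp_small f -> Un_cv f 0.
Proof.
move=> h0 [c [C0 [hc hb0]]].
set C := Rabs C0 + 1.
have hC : 0 < C by have := Rabs_pos C0; rewrite /C; lra.
have hb n : f n <= C * exp (- c * INR n).
  by apply: Rle_trans (hb0 n) _; apply: Rmult_le_compat_r;
    [exact: Rlt_le (exp_pos _) | have := Rle_abs C0; rewrite /C; lra].
move=> eps he.
have he' : 0 < eps * c / C by apply: Rdiv_lt_0_compat => //; nra.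
have [N [hN hN0]] := archimed_cor1 _ he'.
exists N => n hn.
rewrite /R_dist Rminus_0_r Rabs_pos_eq //.
have hNn : INR N <= INR n by apply: le_INR.
have hN' : 0 < INR N by apply: lt_0_INR.
have hex : 1 + c * INR n <= exp (c * INR n) by apply: exp_ineq1_le.
have e1 : exp (- c * INR n) * exp (c * INR n) = 1.
  by rewrite -exp_plus (_ : - c * INR n + c * INR n = 0); [exact: exp_0 | ring].
have hpos := exp_pos (- c * INR n).
apply: Rle_lt_trans (hb n) _.
have h2 : exp (- c * INR n) * (c * INR N) <= 1.
  have : c * INR N <= c * INR n by apply: Rmult_le_compat_l; lra.
  nra.
have h3 : exp (- c * INR n) <= / (c * INR N).
  apply: (Rmult_le_reg_r (c * INR N)); first nra.
  by rewrite Rinv_l; [lra | nra].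
have h4 : C * / (c * INR N) < eps.
  have -> : C * / (c * INR N) = (C / c) * / INR N by field; lra.
  have -> : eps = (C / c) * (eps * c / C) by field; lra.
  by apply: Rmult_lt_compat_l => //; exact: Rdiv_lt_0_compat.
by apply: Rle_lt_trans h4; apply: Rmult_le_compat_l => //; lra.
Qed.

Section NLetter.
Variables (W U V : finType) (PhiW : W -> R) (PhiUW : W -> U -> R)
  (PhiVWU : W -> U -> V -> R).
Hypothesis hW : is_pmf PhiW.
Hypothesis hUW : forall w, is_pmf (PhiUW w).
Hypothesis hVWU : forall w u, is_pmf (PhiVWU w u).
Variable n : nat.
Local Notation sW := {ffun 'I_n -> W}.
Local Notation sU := {ffun 'I_n -> U}.
Local Notation sV := {ffun 'I_n -> V}.
Local Notation PhiV := (PhiV PhiW PhiUW PhiVWU).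

Definition pW (w : sW) : R := rprod (fun t => PhiW (w t)).
Definition pU (w : sW) (u : sU) : R := rprod (fun t => PhiUW (w t) (u t)).
Definition Gam (w : sW) (u : sU) (v : sV) : R := rprod (fun t => PhiVWU (w t) (u t) (v t)).
Definition GamW (w : sW) (v : sV) : R := rsum (fun u => pU w u * Gam w u v).
Definition PhiVW (w : W) (v : V) : R := rsum (fun u => PhiUW w u * PhiVWU w u v).
Definition QV (v : sV) : R := rprod (fun t => PhiV (v t)).

Lemma PhiW_ge0 w : 0 <= PhiW w. Proof. by case: hW. Qed.
Lemma PhiUW_ge0 w u : 0 <= PhiUW w u. Proof. by case: (hUW w). Qed.
Lemma PhiVWU_ge0 w u v : 0 <= PhiVWU w u v. Proof. by case: (hVWU w u). Qed.

Lemma pW_ge0 w : 0 <= pW w. Proof. by apply: rprod_ge0 => t; exact: PhiW_ge0. Qed.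
Lemma pU_ge0 w u : 0 <= pU w u. Proof. by apply: rprod_ge0 => t; exact: PhiUW_ge0. Qed.
Lemma Gam_ge0 w u v : 0 <= Gam w u v. Proof. by apply: rprod_ge0 => t; exact: PhiVWU_ge0. Qed.
Lemma GamW_ge0 w v : 0 <= GamW w v.
Proof. by apply: rsum_ge0 => u; apply: Rmult_le_pos; [exact: pU_ge0 | exact: Gam_ge0]. Qed.
Lemma PhiVW_ge0 w v : 0 <= PhiVW w v.
Proof. by apply: rsum_ge0 => u; apply: Rmult_le_pos; [exact: PhiUW_ge0 | exact: PhiVWU_ge0]. Qed.

Lemma pW_sum : rsum pW = 1.
Proof.
rewrite /pW (rsum_ffun_prod (fun _ => PhiW)) -(rprod1 'I_n).
by apply: rprod_ext => t; case: hW.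
Qed.

Lemma pU_sum w : rsum (pU w) = 1.
Proof.
rewrite /pU (rsum_ffun_prod (fun t => PhiUW (w t))) -(rprod1 'I_n).
by apply: rprod_ext => t; case: (hUW (w t)).
Qed.

Lemma GamW_rprod w v : GamW w v = rprod (fun t => PhiVW (w t) (v t)).
Proof. by rewrite /GamW /PhiVW -rsum_ffun_prod; apply: rsum_ext => u; rewrite -rprod_mult. Qed.

Lemma PhiV_PhiVW v : PhiV v = rsum (fun w => PhiW w * PhiVW w v).
Proof.
rewrite /Defs.PhiV; apply: rsum_ext => w; rewrite /PhiVW -rsum_scal.
by apply: rsum_ext => u; rewrite /pWUV; ring.
Qed.

Lemma PhiVW_sum w : rsum (PhiVW w) = 1.
Proof.
rewrite /PhiVW rsum_swap -[RHS](proj2 (hUW w)); apply: rsum_ext => u.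
by rewrite rsum_scal; case: (hVWU w u) => _ ->; ring.
Qed.

Lemma pWV_PhiVW w v : pWV PhiW PhiUW PhiVWU w v = PhiW w * PhiVW w v.
Proof. by rewrite /pWV /PhiVW -rsum_scal; apply: rsum_ext => u; rewrite /pWUV; ring. Qed.

Lemma QV_avg_GamW v : rsum (fun w => pW w * GamW w v) = QV v.
Proof.
transitivity (rsum (fun w : sW => rprod (fun t => PhiW (w t) * PhiVW (w t) (v t)))).
  by apply: rsum_ext => w; rewrite GamW_rprod /pW rprod_mult.
rewrite (rsum_ffun_prod (fun t w => PhiW w * PhiVW w (v t))).
by apply: rprod_ext => t; rewrite PhiV_PhiVW.
Qed.

Lemma PhiV_sum : rsum PhiV = 1.
Proof.
rewrite (rsum_ext PhiV_PhiVW) rsum_swap -[RHS](proj2 hW); apply: rsum_ext => w.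
by rewrite rsum_scal PhiVW_sum Rmult_1_r.
Qed.

Lemma QV_sum : rsum QV = 1.
Proof.
rewrite /QV (rsum_ffun_prod (fun _ v => PhiV v)) -(rprod1 'I_n).
by apply: rprod_ext => t; rewrite PhiV_sum.
Qed.

Lemma QV_ge0 v : 0 <= QV v.
Proof.
apply: rprod_ge0 => t; rewrite PhiV_PhiVW; apply: rsum_ge0 => w.
by apply: Rmult_le_pos; [exact: PhiW_ge0 | exact: PhiVW_ge0].
Qed.

Section OneShot.
Variables (M1 M2 : nat) (K : R).
Hypotheses (hM1 : (0 < M1)%nat) (hM2 : (0 < M2)%nat) (hK : 0 < K).
Local Notation colU := {ffun 'I_M2 -> sU}.
Local Notation cb1 := {ffun 'I_M1 -> sW}.
Local Notation cb2 := {ffun sW -> colU}.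

Let INR_M1 : 0 < INR M1. Proof. by apply: lt_0_INR; apply/ltP. Qed.
Let INR_M2 : 0 < INR M2. Proof. by apply: lt_0_INR; apply/ltP. Qed.
Let invM1_ge0 : 0 <= / INR M1. Proof. exact: Rlt_le (Rinv_0_lt_compat _ INR_M1). Qed.
Let invM2_ge0 : 0 <= / INR M2. Proof. exact: Rlt_le (Rinv_0_lt_compat _ INR_M2). Qed.

Definition GamT (w : sW) (u : sU) (v : sV) : R :=
  if Rle_dec (Gam w u v * K) (INR (M1 * M2) * QV v) then
    (if Rle_dec (Gam w u v * pW w * K) (INR M2 * QV v) then Gam w u v else 0) else 0.
Definition GamA (w : sW) (u : sU) (v : sV) : R := Gam w u v - GamT w u v.
Definition mGamT (w : sW) (v : sV) : R := rsum (fun u => pU w u * GamT w u v).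
Definition mGamA (w : sW) (v : sV) : R := rsum (fun u => pU w u * GamA w u v).
Definition sqGamT (w : sW) (v : sV) : R := rsum (fun u => pU w u * GamT w u v ^ 2).

Lemma GamT_le w u v : GamT w u v <= Gam w u v.
Proof.
have := Gam_ge0 w u v; rewrite /GamT; case: Rle_dec => _ /=; last lra.
by case: Rle_dec => _ /=; lra.
Qed.

Lemma GamA_ge0 w u v : 0 <= GamA w u v.
Proof. by rewrite /GamA; have := GamT_le w u v; lra. Qed.

Lemma mGamA_ge0 w v : 0 <= mGamA w v.
Proof. by apply: rsum_ge0 => u; apply: Rmult_le_pos; [exact: pU_ge0 | exact: GamA_ge0]. Qed.

(* The two truncation levels, in the form used for second moments. *)
Lemma GamT_sq_le_joint w u v : 1 * GamT w u v ^ 2 <= GamT w u v * (INR (M1 * M2) * QV v / K).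
Proof.
have h0 := Gam_ge0 w u v.
rewrite /GamT; case: Rle_dec => h1 /=; last nra.
case: Rle_dec => h2 /=; last nra.
have := le_div_of_mul_le hK h1; nra.
Qed.

Lemma GamT_sq_le_cond w u v : pW w * GamT w u v ^ 2 <= GamT w u v * (INR M2 * QV v / K).
Proof.
have h0 := Gam_ge0 w u v.
rewrite /GamT; case: Rle_dec => h1 /=; last nra.
case: Rle_dec => h2 /=; last nra.
have := le_div_of_mul_le hK h2; nra.
Qed.

Lemma mGamT_avg_le v : rsum (fun w => pW w * mGamT w v) <= QV v.
Proof.
rewrite -QV_avg_GamW; apply: rsum_le => w; apply: Rmult_le_compat_l; first exact: pW_ge0.
by apply: rsum_le => u; apply: Rmult_le_compat_l; [exact: pU_ge0 | exact: GamT_le].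
Qed.

Lemma sqGamT_le w v : sqGamT w v <= INR (M1 * M2) * QV v / K * mGamT w v.
Proof.
rewrite -[sqGamT w v]Rmult_1_l.
exact: (truncated_second_moment_le (pU_ge0 w) (fun u => GamT_sq_le_joint w u v)).
Qed.

Lemma pW_sqGamT_le w v : pW w * sqGamT w v <= INR M2 * QV v / K * mGamT w v.
Proof. exact: (truncated_second_moment_le (pU_ge0 w) (fun u => GamT_sq_le_cond w u v)). Qed.

Lemma sqGamT_avg_le v : rsum (fun w => pW w * (/ INR M2 * sqGamT w v)) <= INR M1 * QV v ^ 2 / K.
Proof.
have hL : 0 <= INR M1 * QV v / K.
  apply: Rmult_le_pos; last exact: Rlt_le (Rinv_0_lt_compat _ hK).
  by apply: Rmult_le_pos; [lra | exact: QV_ge0].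
apply: Rle_trans (rsum_le (g := fun w => INR M1 * QV v / K * (pW w * mGamT w v)) _) _.
  move=> w; have := sqGamT_le w v; have := pW_ge0 w; rewrite mult_INR.
  have -> : INR M1 * QV v / K * (pW w * mGamT w v)
    = pW w * (/ INR M2 * (INR M1 * INR M2 * QV v / K * mGamT w v)) by field; lra.
  move=> hp h; apply: Rmult_le_compat_l => //; exact: Rmult_le_compat_l.
rewrite rsum_scal (_ : INR M1 * QV v ^ 2 / K = INR M1 * QV v / K * QV v); last by field; lra.
exact: Rmult_le_compat_l (mGamT_avg_le v).
Qed.

Lemma sqGamT_collision_le v : rsum (fun w => pW w * pW w * (/ INR M2 * sqGamT w v)) <= QV v ^ 2 / K.
Proof.
have hL : 0 <= QV v / K.
  by apply: Rmult_le_pos; [exact: QV_ge0 | exact: Rlt_le (Rinv_0_lt_compat _ hK)].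
apply: Rle_trans (rsum_le (g := fun w => QV v / K * (pW w * mGamT w v)) _) _.
  move=> w; have := pW_sqGamT_le w v; have := pW_ge0 w.
  have -> : QV v / K * (pW w * mGamT w v)
    = pW w * (/ INR M2 * (INR M2 * QV v / K * mGamT w v)) by field; lra.
  have -> : pW w * pW w * (/ INR M2 * sqGamT w v) = pW w * (/ INR M2 * (pW w * sqGamT w v)).
    by ring.
  move=> hp h; apply: Rmult_le_compat_l => //; exact: Rmult_le_compat_l.
rewrite rsum_scal (_ : QV v ^ 2 / K = QV v / K * QV v); last by field; lra.
exact: Rmult_le_compat_l (mGamT_avg_le v).
Qed.

Definition pCol (w : sW) (x : colU) : R := rprod (fun k => pU w (x k)).
Local Notation pB1 B1 := (rprod (fun j => pW (B1 j))).
Local Notation pB2 B2 := (rprod (fun w => pCol w (B2 w))).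

Lemma pCol_ge0 w x : 0 <= pCol w x.
Proof. by apply: rprod_ge0 => k; exact: pU_ge0. Qed.

Lemma pCol_sum w : rsum (pCol w) = 1.
Proof. exact: (@prod_pmf_sum1 'I_M2 sU (fun _ => pU w) (fun _ => pU_sum w)). Qed.

Lemma pB1_ge0 (B1 : cb1) : 0 <= pB1 B1.
Proof. by apply: rprod_ge0 => j; exact: pW_ge0. Qed.

Lemma pB1_sum : rsum (fun B1 : cb1 => pB1 B1) = 1.
Proof. exact: (@prod_pmf_sum1 'I_M1 sW (fun _ => pW) (fun _ => pW_sum)). Qed.

Lemma pB2_ge0 (B2 : cb2) : 0 <= pB2 B2.
Proof. by apply: rprod_ge0 => w; exact: pCol_ge0. Qed.

Lemma pB2_sum : rsum (fun B2 : cb2 => pB2 B2) = 1.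
Proof. exact: (@prod_pmf_sum1 sW _ pCol pCol_sum). Qed.

Definition devT (w : sW) (x : colU) (v : sV) : R :=
  / INR M2 * rsum (fun k => GamT w (x k) v - mGamT w v).

Lemma devT_mean0 w v : rsum (fun x => pCol w x * devT w x v) = 0.
Proof.
have hp (k : 'I_M2) : rsum ((fun _ => pU w) k) = 1 by exact: pU_sum.
rewrite /devT mean_of_sum (rsum_ext (g := fun _ => 0)); first by rewrite rsum0 Rmult_0_r.
move=> k; rewrite (prod_pmf_marg1 hp k (fun u => GamT w u v - mGamT w v)).
exact: centred_mean0 (pU_sum w).
Qed.

Lemma devT_second_moment_le w v :
  rsum (fun x => pCol w x * devT w x v ^ 2) <= / INR M2 * sqGamT w v.
Proof.
transitivity ((/ INR M2) ^ 2 * rsum (fun x : colU => pCol w x *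
    (rsum (fun k => GamT w (x k) v - mGamT w v)) ^ 2)).
  by right; rewrite -rsum_scal; apply: rsum_ext => x; rewrite /devT; ring.
apply: Rle_trans (Rmult_le_compat_l _ _ _ (pow2_ge_0 _)
  (@iid_sum_variance_le 'I_M2 _ (pU w) (fun u => GamT w u v) (pU_sum w))) _.
by rewrite card_ord; right; rewrite /sqGamT; field; lra.
Qed.

Definition collT (B1 : cb1) (v : sV) : R :=
  rsum (fun j => rsum (fun j' => if B1 j == B1 j' then / INR M2 * sqGamT (B1 j) v else 0)).

Lemma collT_ge0 B1 v : 0 <= collT B1 v.
Proof.
apply: rsum_ge0 => j; apply: rsum_ge0 => j'; case: eqP => _; last lra.
apply: Rmult_le_pos => //; apply: rsum_ge0 => u.
by apply: Rmult_le_pos; [exact: pU_ge0 | exact: pow2_ge_0].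
Qed.

(* Averaged over the second codebook, only rows sharing a codeword interact. *)
Lemma devT_inner_second_moment_le (B1 : cb1) v :
  rsum (fun B2 : cb2 => pB2 B2 * (/ INR M1 * rsum (fun j => devT (B1 j) (B2 (B1 j)) v)) ^ 2)
  <= (/ INR M1) ^ 2 * collT B1 v.
Proof.
transitivity ((/ INR M1) ^ 2 * rsum (fun B2 : cb2 =>
   pB2 B2 * (rsum (fun j => devT (B1 j) (B2 (B1 j)) v)) ^ 2)).
  by right; rewrite -rsum_scal; apply: rsum_ext => B2; ring.
rewrite (@indep_sum_second_moment sW colU 'I_M1 pCol pCol_sum (fun w x => devT w x v)
   (fun w => devT_mean0 w v) (fun j => B1 j)).
apply: Rmult_le_compat_l; first exact: pow2_ge_0.
by apply: rsum_le => j; apply: rsum_le => j'; case: eqP => _; [exact: devT_second_moment_le | lra].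
Qed.

Lemma collT_mean_le v :
  rsum (fun B1 : cb1 => pB1 B1 * collT B1 v) <= INR M1 ^ 2 * (2 * QV v ^ 2 / K).
Proof.
have hh w : 0 <= / INR M2 * sqGamT w v.
  apply: Rmult_le_pos => //; apply: rsum_ge0 => u.
  by apply: Rmult_le_pos; [exact: pU_ge0 | exact: pow2_ge_0].
apply: Rle_trans (@collision_sum_le 'I_M1 sW pW (fun w => / INR M2 * sqGamT w v)
  pW_ge0 pW_sum hh) _.
rewrite card_ord.
have hM : 0 <= INR M1 by lra.
apply: Rle_trans (Rplus_le_compat _ _ _ _ (Rmult_le_compat_l _ _ _ hM (sqGamT_avg_le v))
  (Rmult_le_compat_l _ _ _ (Rmult_le_pos _ _ hM hM) (sqGamT_collision_le v))) _.
by right; field; lra.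
Qed.

(* Cauchy-Schwarz twice: the typical inner deviation is O(QV / sqrt K). *)
Lemma devT_expected_abs_le v :
  rsum (fun B1 : cb1 => pB1 B1 * rsum (fun B2 : cb2 => pB2 B2 *
    Rabs (/ INR M1 * rsum (fun j => devT (B1 j) (B2 (B1 j)) v))))
  <= sqrt (2 * QV v ^ 2 / K).
Proof.
apply: Rle_trans (rsum_le (g := fun B1 : cb1 => pB1 B1 * sqrt ((/ INR M1) ^ 2 * collT B1 v)) _) _.
  move=> B1; apply: Rmult_le_compat_l; first exact: pB1_ge0.
  apply: Rle_trans (mean_abs_le_sqrt_second_moment _ pB2_ge0 pB2_sum) _.
  exact: sqrt_le_1_alt (devT_inner_second_moment_le B1 v).
apply: Rle_trans (mean_le_sqrt_second_moment _ pB1_ge0 pB1_sum) _.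
apply: sqrt_le_1_alt.
rewrite (rsum_ext (g := fun B1 : cb1 => (/ INR M1) ^ 2 * (pB1 B1 * collT B1 v))); last first.
  move=> B1; rewrite pow2_sqrt; first ring.
  by apply: Rmult_le_pos; [exact: pow2_ge_0 | exact: collT_ge0].
rewrite rsum_scal; apply: Rle_trans (Rmult_le_compat_l _ _ _ (pow2_ge_0 _) (collT_mean_le v)) _.
by right; field; lra.
Qed.

Definition devA (B1 : cb1) (B2 : cb2) (v : sV) : R :=
  / INR M1 * rsum (fun j => / INR M2 * rsum (fun k => GamA (B1 j) (B2 (B1 j) k) v - mGamA (B1 j) v)).

Lemma GamA_column_mean w k v :
  rsum (fun B2 : cb2 => pB2 B2 * GamA w (B2 w k) v) = mGamA w v.
Proof.
rewrite (@prod_pmf_marg1 sW _ pCol pCol_sum w (fun x => GamA w (x k) v)).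
exact: (@prod_pmf_marg1 'I_M2 _ (fun _ => pU w) (fun _ => pU_sum w) k (fun u => GamA w u v)).
Qed.

(* Since GamA >= 0, E |devA| is at most twice the mean atypical mass. *)
Lemma devA_inner_abs_le B1 v :
  rsum (fun B2 : cb2 => pB2 B2 * Rabs (devA B1 B2 v))
  <= / INR M1 * rsum (fun j => 2 * mGamA (B1 j) v).
Proof.
apply: Rle_trans (rsum_le (g := fun B2 : cb2 =>
   pB2 B2 * (/ INR M1 * rsum (fun j => / INR M2 * rsum (fun k =>
      GamA (B1 j) (B2 (B1 j) k) v + mGamA (B1 j) v)))) _) _.
  move=> B2; apply: Rmult_le_compat_l; first exact: pB2_ge0.
  rewrite /devA Rabs_mult (Rabs_pos_eq _ invM1_ge0); apply: Rmult_le_compat_l => //.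
  apply: Rle_trans (rsum_abs _) _; apply: rsum_le => j.
  rewrite Rabs_mult (Rabs_pos_eq _ invM2_ge0); apply: Rmult_le_compat_l => //.
  apply: Rle_trans (rsum_abs _) _; apply: rsum_le => k.
  by apply: abs_sub_le; [exact: GamA_ge0 | exact: mGamA_ge0].
rewrite mean_of_double_sum; right; congr (_ * _); apply: rsum_ext => j.
rewrite (rsum_ext (g := fun k => 2 * mGamA (B1 j) v)); last first.
  move=> k; rewrite (rsum_ext (g := fun B2 : cb2 =>
     pB2 B2 * GamA (B1 j) (B2 (B1 j) k) v + mGamA (B1 j) v * pB2 B2)); last by move=> B2; ring.
  by rewrite rsum_plus GamA_column_mean rsum_scal pB2_sum; ring.
by rewrite rsum_const card_ord; field; lra.
Qed.

Lemma devA_expected_abs_le v :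
  rsum (fun B1 : cb1 => pB1 B1 * rsum (fun B2 : cb2 => pB2 B2 * Rabs (devA B1 B2 v)))
  <= 2 * rsum (fun w => pW w * mGamA w v).
Proof.
apply: Rle_trans (rsum_le (g := fun B1 : cb1 =>
  pB1 B1 * (/ INR M1 * rsum (fun j => 2 * mGamA (B1 j) v))) _) _.
  by move=> B1; apply: Rmult_le_compat_l; [exact: pB1_ge0 | exact: devA_inner_abs_le].
rewrite mean_of_sum (rsum_ext (g := fun _ => 2 * rsum (fun w => pW w * mGamA w v))); last first.
  move=> j; rewrite (@prod_pmf_marg1 'I_M1 _ (fun _ => pW) (fun _ => pW_sum) j (fun w => 2 * mGamA w v)).
  by rewrite -rsum_scal; apply: rsum_ext => w; ring.
by rewrite rsum_const card_ord; right; field; lra.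
Qed.

Definition GamWT (w : sW) (v : sV) : R :=
  if Rle_dec (GamW w v * K) (INR M1 * QV v) then GamW w v else 0.
Definition GamWA (w : sW) (v : sV) : R := GamW w v - GamWT w v.
Definition mGamWT (v : sV) : R := rsum (fun w => pW w * GamWT w v).
Definition mGamWA (v : sV) : R := rsum (fun w => pW w * GamWA w v).

Lemma GamWT_le w v : GamWT w v <= GamW w v.
Proof. by have := GamW_ge0 w v; rewrite /GamWT; case: Rle_dec => _ /=; lra. Qed.

Lemma GamWA_ge0 w v : 0 <= GamWA w v.
Proof. by rewrite /GamWA; have := GamWT_le w v; lra. Qed.

Lemma GamWT_sq_le w v : 1 * GamWT w v ^ 2 <= GamWT w v * (INR M1 * QV v / K).
Proof.
have h0 := GamW_ge0 w v.
rewrite /GamWT; case: Rle_dec => h1 /=; last nra.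
have := le_div_of_mul_le hK h1; nra.
Qed.

(* Variance bound (Cauchy-Schwarz) for the typical outer average, and the
   twice-the-mean bound for the atypical one. *)
Lemma GamWT_dev_abs_le v : rsum (fun B1 : cb1 => pB1 B1 *
   Rabs (/ INR M1 * rsum (fun j => GamWT (B1 j) v - mGamWT v))) <= sqrt (QV v ^ 2 / K).
Proof.
apply: Rle_trans (mean_abs_le_sqrt_second_moment _ pB1_ge0 pB1_sum) _.
apply: sqrt_le_1_alt.
rewrite (rsum_ext (g := fun B1 : cb1 => (/ INR M1) ^ 2 * (pB1 B1 *
     (rsum (fun j => GamWT (B1 j) v - rsum (fun y => pW y * GamWT y v))) ^ 2))); last first.
  by move=> B1; rewrite /mGamWT; ring.
rewrite rsum_scal.
apply: Rle_trans (Rmult_le_compat_l _ _ _ (pow2_ge_0 _)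
  (@iid_sum_variance_le 'I_M1 _ pW (fun w => GamWT w v) pW_sum)) _.
rewrite card_ord.
have h : rsum (fun x => pW x * GamWT x v ^ 2) <= INR M1 * QV v / K * QV v.
  rewrite -[rsum _]Rmult_1_l.
  apply: Rle_trans (truncated_second_moment_le pW_ge0 (GamWT_sq_le ^~ v)) _.
  apply: Rmult_le_compat_l.
    apply: Rmult_le_pos; last exact: Rlt_le (Rinv_0_lt_compat _ hK).
    by apply: Rmult_le_pos; [lra | exact: QV_ge0].
  rewrite -QV_avg_GamW; apply: rsum_le => x.
  by apply: Rmult_le_compat_l; [exact: pW_ge0 | exact: GamWT_le].
apply: Rle_trans (Rmult_le_compat_l _ _ _ (pow2_ge_0 _) (Rmult_le_compat_l _ _ _ (pos_INR _) h)) _.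
by right; field; lra.
Qed.

Lemma GamWA_dev_abs_le v : rsum (fun B1 : cb1 => pB1 B1 *
   Rabs (/ INR M1 * rsum (fun j => GamWA (B1 j) v - mGamWA v))) <= 2 * mGamWA v.
Proof.
have := @iid_abs_dev_le 'I_M1 _ pW (fun w => GamWA w v) pW_ge0 pW_sum (GamWA_ge0 ^~ v).
by rewrite card_ord; apply.
Qed.

Lemma PVn_sub_QVn (B1 : cb1) (B2 : cb2) v :
  PVn PhiVWU B1 B2 v - QVn PhiW PhiUW PhiVWU v =
  / INR M1 * rsum (fun j => devT (B1 j) (B2 (B1 j)) v) + devA B1 B2 v +
  / INR M1 * rsum (fun j => GamWT (B1 j) v - mGamWT v)
  + / INR M1 * rsum (fun j => GamWA (B1 j) v - mGamWA v).
Proof.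
have inner w (x : colU) : devT w x v + / INR M2 * rsum (fun k => GamA w (x k) v - mGamA w v)
   = / INR M2 * rsum (fun k => Gam w (x k) v) - GamW w v.
  have eG : GamW w v = mGamT w v + mGamA w v.
    by rewrite /GamW /mGamT /mGamA -rsum_plus; apply: rsum_ext => u; rewrite /GamA; ring.
  rewrite /devT -Rmult_plus_distr_l -rsum_plus.
  rewrite (rsum_ext (g := fun k => Gam w (x k) v + (- GamW w v))); last first.
    by move=> k; rewrite eG /GamA; ring.
  by rewrite rsum_plus rsum_const card_ord; field; lra.
have outer w : GamWT w v - mGamWT v + (GamWA w v - mGamWA v) = GamW w v - QV v.
  rewrite -QV_avg_GamW /mGamWT /mGamWA (rsum_ext (f := fun w => pW w * GamW w v)
    (g := fun w => pW w * GamWT w v + pW w * GamWA w v)); last by move=> w'; rewrite /GamWA; ring.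
  by rewrite rsum_plus /GamWA; ring.
have -> : PVn PhiVWU B1 B2 v
    = / INR M1 * rsum (fun j => / INR M2 * rsum (fun k => Gam (B1 j) (B2 (B1 j) k) v)).
  by rewrite /PVn mult_INR Rinv_mult Rmult_assoc -rsum_scal.
have -> : QVn PhiW PhiUW PhiVWU v = / INR M1 * rsum (fun j : 'I_M1 => QV v).
  by rewrite rsum_const card_ord /QVn /QV; field; lra.
rewrite /devA -Rmult_minus_distr_l -rsum_minus.
rewrite (rsum_ext (g := fun j => devT (B1 j) (B2 (B1 j)) v
   + / INR M2 * rsum (fun k => GamA (B1 j) (B2 (B1 j) k) v - mGamA (B1 j) v)
   + (GamWT (B1 j) v - mGamWT v + (GamWA (B1 j) v - mGamWA v)))); last first.
  by move=> j; rewrite inner outer; ring.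
by rewrite !rsum_plus; ring.
Qed.

Definition devSum (B1 : cb1) (B2 : cb2) (v : sV) : R :=
  Rabs (/ INR M1 * rsum (fun j => devT (B1 j) (B2 (B1 j)) v)) + Rabs (devA B1 B2 v)
  + Rabs (/ INR M1 * rsum (fun j => GamWT (B1 j) v - mGamWT v))
  + Rabs (/ INR M1 * rsum (fun j => GamWA (B1 j) v - mGamWA v)).

Lemma tv_le_devSum B1 B2 : tv PhiW PhiUW PhiVWU B1 B2 <= / 2 * rsum (devSum B1 B2).
Proof.
rewrite /tv; apply: Rmult_le_compat_l; first lra.
apply: rsum_le => v; rewrite PVn_sub_QVn /devSum.
apply: Rle_trans (Rabs_triang _ _) _; apply: Rplus_le_compat_r.
apply: Rle_trans (Rabs_triang _ _) _; apply: Rplus_le_compat_r.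
exact: Rabs_triang.
Qed.

Lemma devSum_inner_mean (B1 : cb1) v :
  rsum (fun B2 : cb2 => pB2 B2 * devSum B1 B2 v)
  = rsum (fun B2 : cb2 => pB2 B2 * Rabs (/ INR M1 * rsum (fun j => devT (B1 j) (B2 (B1 j)) v)))
    + rsum (fun B2 : cb2 => pB2 B2 * Rabs (devA B1 B2 v))
    + Rabs (/ INR M1 * rsum (fun j => GamWT (B1 j) v - mGamWT v))
    + Rabs (/ INR M1 * rsum (fun j => GamWA (B1 j) v - mGamWA v)).
Proof.
rewrite -[in RHS](Rmult_1_l (Rabs (_ * rsum (fun j => GamWT _ _ - _)))).
rewrite -[in RHS](Rmult_1_l (Rabs (_ * rsum (fun j => GamWA _ _ - _)))).
rewrite -pB2_sum -!rsum_scalr -!rsum_plus; apply: rsum_ext => B2.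
by rewrite /devSum; ring.
Qed.

Lemma devSum_expected_le v :
  rsum (fun B1 : cb1 => pB1 B1 * rsum (fun B2 : cb2 => pB2 B2 * devSum B1 B2 v))
  <= sqrt (2 / K) * QV v + 2 * rsum (fun w => pW w * mGamA w v)
     + sqrt (1 / K) * QV v + 2 * mGamWA v.
Proof.
have sqrt_scaled c : 0 <= c -> sqrt (c * QV v ^ 2 / K) = sqrt (c / K) * QV v.
  move=> hc; rewrite (_ : c * QV v ^ 2 / K = c / K * QV v ^ 2); last by field; lra.
  rewrite sqrt_mult_alt ?sqrt_pow2 //; first exact: QV_ge0.
  by apply: Rmult_le_pos => //; exact: Rlt_le (Rinv_0_lt_compat _ hK).
rewrite (rsum_ext (fun B1 : cb1 => congr1 (Rmult (pB1 B1)) (devSum_inner_mean B1 v))).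
rewrite (rsum_ext (g := fun B1 : cb1 =>
  pB1 B1 * rsum (fun B2 : cb2 => pB2 B2 * Rabs (/ INR M1 * rsum (fun j => devT (B1 j) (B2 (B1 j)) v)))
  + pB1 B1 * rsum (fun B2 : cb2 => pB2 B2 * Rabs (devA B1 B2 v))
  + pB1 B1 * Rabs (/ INR M1 * rsum (fun j => GamWT (B1 j) v - mGamWT v))
  + pB1 B1 * Rabs (/ INR M1 * rsum (fun j => GamWA (B1 j) v - mGamWA v)))); last first.
  by move=> B1; ring.
rewrite !rsum_plus -(sqrt_scaled 2) -?(sqrt_scaled 1); try lra.
rewrite Rmult_1_l.
apply: Rplus_le_compat; last exact: GamWA_dev_abs_le.
apply: Rplus_le_compat; last exact: GamWT_dev_abs_le.
by apply: Rplus_le_compat; [exact: devT_expected_abs_le | exact: devA_expected_abs_le].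
Qed.

Lemma expected_tv_le : expected_tv PhiW PhiUW PhiVWU n M1 M2 <=
  / 2 * (sqrt (2 / K) + sqrt (1 / K) + 2 * rsum (fun v => rsum (fun w => pW w * mGamA w v))
         + 2 * rsum mGamWA).
Proof.
apply: Rle_trans (rsum_le (g := fun B1 : cb1 => rsum (fun v => / 2 *
   (pB1 B1 * rsum (fun B2 : cb2 => pB2 B2 * devSum B1 B2 v)))) _) _.
  move=> B1; apply: Rle_trans (rsum_le (g := fun B2 : cb2 =>
    pB1 B1 * pB2 B2 * (/ 2 * rsum (devSum B1 B2))) _) _.
    move=> B2; apply: Rmult_le_compat_l; last exact: tv_le_devSum.
    exact: Rmult_le_pos (pB1_ge0 B1) (pB2_ge0 B2).
  right; transitivity (rsum (fun B2 : cb2 => rsum (fun v =>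
    / 2 * (pB1 B1 * (pB2 B2 * devSum B1 B2 v))))).
    by apply: rsum_ext => B2; rewrite -!rsum_scal; apply: rsum_ext => v; ring.
  by rewrite rsum_swap; apply: rsum_ext => v; rewrite -!rsum_scal.
apply: Rle_trans (_ : _ <= / 2 * rsum (fun v => rsum (fun B1 : cb1 =>
  pB1 B1 * rsum (fun B2 : cb2 => pB2 B2 * devSum B1 B2 v)))) _.
  right; rewrite rsum_swap -[in RHS]rsum_scal; apply: rsum_ext => v.
  by rewrite -[in RHS]rsum_scal.
apply: Rmult_le_compat_l; first lra.
apply: Rle_trans (rsum_le (fun v => devSum_expected_le v)) _.
by rewrite !rsum_plus !rsum_scal QV_sum; right; ring.
Qed.

End OneShot.

Lemma rsum_seq3_rprod (f : W -> U -> V -> R) :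
  rsum (fun w : sW => rsum (fun u : sU => rsum (fun v : sV => rprod (fun t => f (w t) (u t) (v t)))))
  = (rsum (fun w => rsum (fun u => rsum (fun v => f w u v)))) ^ n.
Proof.
rewrite -rprod_const_ord -rsum_ffun_prod; apply: rsum_ext => w.
rewrite -rsum_ffun_prod; apply: rsum_ext => u.
exact: (rsum_ffun_prod (fun t v => f (w t) (u t) v)).
Qed.

Lemma rsum_seq2_rprod (f : W -> V -> R) :
  rsum (fun w : sW => rsum (fun v : sV => rprod (fun t => f (w t) (v t))))
  = (rsum (fun w => rsum (fun v => f w v))) ^ n.
Proof.
rewrite -rprod_const_ord -rsum_ffun_prod; apply: rsum_ext => w.
exact: (rsum_ffun_prod (fun t v => f (w t) v)).
Qed.

Local Notation pWUV := (pWUV PhiW PhiUW PhiVWU).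

Lemma pWUV_ge0 w u v : 0 <= pWUV w u v.
Proof.
by apply: Rmult_le_pos; [apply: Rmult_le_pos|]; [exact: PhiW_ge0 | exact: PhiUW_ge0 | exact: PhiVWU_ge0].
Qed.

Lemma PhiV_ge_pWUV w u v : pWUV w u v <= PhiV v.
Proof.
apply: Rle_trans (@rsum_term _ (fun u => pWUV w u v) u _) _; first by move=> ?; apply: pWUV_ge0.
apply: (@rsum_term _ (fun w => rsum (fun u => pWUV w u v)) w).
by move=> ?; apply: rsum_ge0 => ?; exact: pWUV_ge0.
Qed.

Lemma pWUV_pos w u v : 0 < pWUV w u v ->
  0 < PhiW w /\ 0 < PhiUW w u /\ 0 < PhiVWU w u v /\ 0 < PhiV v.
Proof.
move=> h; have hV := Rlt_le_trans _ _ _ h (PhiV_ge_pWUV w u v).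
rewrite /Defs.pWUV in h.
case: (Rle_lt_or_eq_dec _ _ (PhiW_ge0 w)) => [hw|e]; last by rewrite -e in h; lra.
case: (Rle_lt_or_eq_dec _ _ (PhiUW_ge0 w u)) => [hu|e]; last by rewrite -e in h; lra.
case: (Rle_lt_or_eq_dec _ _ (PhiVWU_ge0 w u v)) => [hv|e]; last by rewrite -e in h; lra.
by [].
Qed.

Lemma atypical_joint_mass_le (a : W -> U -> V -> R) (F : sW -> sU -> sV -> R) c b lam :
  (forall w u v, 0 < pWUV w u v -> 0 < a w u v) ->
  (forall w u v, F w u v = rprod (fun t => a (w t) (u t) (v t))) -> 0 < c -> 0 < lam ->
  rsum (fun v : sV => rsum (fun w : sW => rsum (fun u : sU =>
    pW w * pU w u * Gam w u v * ind_lt (c * exp (INR n * b) * QV v) (F w u v))))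
  <= exp (- lam * ln c) * (rsum (fun w => rsum (fun u => rsum (fun v =>
       pWUV w u v * exp (lam * (ln (a w u v) - ln (PhiV v) - b)))))) ^ n.
Proof.
move=> ha hF hc hl.
rewrite -rsum_seq3_rprod -!rsum_scal rsum_swap; apply: rsum_le => w.
rewrite -!rsum_scal rsum_swap; apply: rsum_le => u.
rewrite -!rsum_scal; apply: rsum_le => v.
have -> : pW w * pU w u * Gam w u v = rprod (fun t => pWUV (w t) (u t) (v t)).
  by rewrite /pW /pU /Gam -!rprod_mult.
rewrite hF; apply: (product_markov (d := fun t => PhiV (v t))) => // [t|t hp].
  exact: pWUV_ge0.
by split; [exact: ha | have := pWUV_pos hp; tauto].
Qed.

Lemma atypical_pair_mass_le c b lam : 0 < c -> 0 < lam ->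
  rsum (fun v : sV => rsum (fun w : sW =>
    pW w * GamW w v * ind_lt (c * exp (INR n * b) * QV v) (GamW w v)))
  <= exp (- lam * ln c) * (rsum (fun w => rsum (fun v =>
       PhiW w * PhiVW w v * exp (lam * (ln (PhiVW w v) - ln (PhiV v) - b))))) ^ n.
Proof.
move=> hc hl.
rewrite -rsum_seq2_rprod -!rsum_scal rsum_swap; apply: rsum_le => w.
rewrite -!rsum_scal; apply: rsum_le => v.
have -> : pW w * GamW w v = rprod (fun t => PhiW (w t) * PhiVW (w t) (v t)).
  by rewrite GamW_rprod /pW -!rprod_mult.
rewrite GamW_rprod; apply: (product_markov (d := fun t => PhiV (v t))) => // [t|t hp].
  by apply: Rmult_le_pos; [exact: PhiW_ge0 | exact: PhiVW_ge0].
have h0 := PhiW_ge0 (w t); have h1 := PhiVW_ge0 (w t) (v t).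
split; first by case: h1 => // e; rewrite -e in hp; lra.
apply: Rlt_le_trans hp _; rewrite PhiV_PhiVW.
apply: (@rsum_term _ (fun w => PhiW w * PhiVW w (v t)) (w t)) => x.
by apply: Rmult_le_pos; [exact: PhiW_ge0 | exact: PhiVW_ge0].
Qed.

Lemma truncated_ind_lt x q M K t : 0 < K -> 0 <= q -> t <= M / K ->
  ~ (x * K <= M * q) -> ind_lt (t * q) x = 1.
Proof.
move=> hK hq ht hx; rewrite /ind_lt; case: Rlt_dec => // h; exfalso; apply: h.
have : M * q / K < x.
  apply: (Rmult_lt_reg_r K) => //; rewrite (_ : M * q / K * K = M * q); [lra | field; lra].
have : t * q <= M / K * q by apply: Rmult_le_compat_r.
by rewrite (_ : M / K * q = M * q / K); [lra | field; lra].
Qed.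

Lemma GamA_le_indicators M1 M2 K t1 t2 w u v : 0 < K ->
  t1 <= INR (M1 * M2) / K -> t2 <= INR M2 / K ->
  GamA M1 M2 K w u v
  <= Gam w u v * ind_lt (t1 * QV v) (Gam w u v) + Gam w u v * ind_lt (t2 * QV v) (Gam w u v * pW w).
Proof.
move=> hK e1 e2; have hG := Gam_ge0 w u v; have hq := QV_ge0 v.
have k1 := Rmult_le_pos _ _ hG (ind_lt_ge0 (t1 * QV v) (Gam w u v)).
have k2 := Rmult_le_pos _ _ hG (ind_lt_ge0 (t2 * QV v) (Gam w u v * pW w)).
rewrite /GamA /GamT; case: Rle_dec => g1 /=; last first.
  by rewrite (truncated_ind_lt hK hq e1 g1); lra.
case: Rle_dec => g2 /=; first lra.
by rewrite (truncated_ind_lt hK hq e2 g2); lra.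
Qed.

Lemma GamA_mass_le M1 M2 K t1 t2 : 0 < K ->
  t1 <= INR (M1 * M2) / K -> t2 <= INR M2 / K ->
  rsum (fun v => rsum (fun w => pW w * mGamA M1 M2 K w v)) <=
  rsum (fun v : sV => rsum (fun w : sW => rsum (fun u : sU =>
    pW w * pU w u * Gam w u v * ind_lt (t1 * QV v) (Gam w u v)))) +
  rsum (fun v : sV => rsum (fun w : sW => rsum (fun u : sU =>
    pW w * pU w u * Gam w u v * ind_lt (t2 * QV v) (Gam w u v * pW w)))).
Proof.
move=> hK e1 e2.
rewrite -rsum_plus; apply: rsum_le => v; rewrite -rsum_plus; apply: rsum_le => w.
rewrite -rsum_plus /mGamA -rsum_scal; apply: rsum_le => u.
have hp : 0 <= pW w * pU w u by apply: Rmult_le_pos; [exact: pW_ge0 | exact: pU_ge0].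
rewrite -Rmult_assoc.
apply: Rle_trans (Rmult_le_compat_l _ _ _ hp (GamA_le_indicators w u v hK e1 e2)) _.
by right; ring.
Qed.

Lemma GamWA_mass_le M1 K t : 0 < K -> t <= INR M1 / K ->
  rsum (fun v => mGamWA M1 K v) <=
  rsum (fun v : sV => rsum (fun w : sW => pW w * GamW w v * ind_lt (t * QV v) (GamW w v))).
Proof.
move=> hK e; apply: rsum_le => v; apply: rsum_le => w.
rewrite Rmult_assoc; apply: Rmult_le_compat_l; first exact: pW_ge0.
rewrite /GamWA /GamWT; have hq := QV_ge0 v; have hG := GamW_ge0 w v.
case: Rle_dec => g /=; last by rewrite (truncated_ind_lt hK hq e g); lra.
by rewrite Rminus_diag; apply: Rmult_le_pos => //; exact: ind_lt_ge0.
Qed.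

End NLetter.

Lemma ln2_pos : 0 < ln 2.
Proof. by rewrite -ln_1; apply: ln_increasing; lra. Qed.

Lemma xlogr_eq x y a : 0 < x -> 0 < y -> x / y = a -> 0 < a -> ln 2 * xlogr x y = x * ln a.
Proof.
move=> hx hy e ha; rewrite /xlogr; case: (Req_EM_T x 0) => [e0|ne0]; first lra.
have := ln2_pos; rewrite /log2 e => h /=; field; lra.
Qed.

Lemma ln_div x y : 0 < x -> 0 < y -> ln (x / y) = ln x - ln y.
Proof.
move=> hx hy; have hy' := Rinv_0_lt_compat _ hy.
by rewrite /Rdiv ln_mult // ln_Rinv //; ring.
Qed.

Lemma xlogr_0l y : xlogr 0 y = 0.
Proof. by rewrite /xlogr; case: (Req_EM_T 0 0). Qed.

(* Single-letter identities: the mean log-likelihood ratios governing the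
   three atypical events are I(W,U;V), I(W,U;V) - H(W) and I(W;V) (in nats). *)
Section SingleLetter.
Variables (W U V : finType) (PhiW : W -> R) (PhiUW : W -> U -> R)
  (PhiVWU : W -> U -> V -> R).
Hypothesis hW : is_pmf PhiW.
Hypothesis hUW : forall w, is_pmf (PhiUW w).
Hypothesis hVWU : forall w u, is_pmf (PhiVWU w u).
Local Notation pWUV := (pWUV PhiW PhiUW PhiVWU).
Local Notation PhiV := (PhiV PhiW PhiUW PhiVWU).
Local Notation PhiVW := (PhiVW PhiUW PhiVWU).

Lemma mean_llr_WU_V : rsum (fun w => rsum (fun u => rsum (fun v =>
   pWUV w u v * (ln (PhiVWU w u v) - ln (PhiV v))))) = ln 2 * mi_WU_V PhiW PhiUW PhiVWU.
Proof.
rewrite /mi_WU_V -rsum_scal; apply: rsum_ext => w; rewrite -rsum_scal; apply: rsum_ext => u.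
rewrite -rsum_scal; apply: rsum_ext => v.
case: (pWUV_ge0 hW hUW hVWU w u v) => hp; last by rewrite -hp xlogr_0l; ring.
have [h1 [h2 [h3 h4]]] := pWUV_pos hW hUW hVWU hp.
rewrite (@xlogr_eq _ _ (PhiVWU w u v / PhiV v)).
- by rewrite ln_div //; ring.
- by [].
- by rewrite /pWU; apply: Rmult_lt_0_compat => //; exact: Rmult_lt_0_compat.
- by rewrite /pWU /Defs.pWUV; field; lra.
- exact: Rdiv_lt_0_compat.
Qed.

Lemma mean_log_PhiW : rsum (fun w => PhiW w * ln (PhiW w)) = - ln 2 * entW PhiW.
Proof.
rewrite /entW (_ : - ln 2 * - _ = ln 2 * rsum (fun w => xlogr (PhiW w) 1)); last by ring.
rewrite -rsum_scal; apply: rsum_ext => w.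
case: (PhiW_ge0 hW w) => hp; last by rewrite -hp xlogr_0l; ring.
by rewrite (@xlogr_eq _ _ (PhiW w)) //; [lra | field].
Qed.

Lemma mean_llr_WU_V_joint : rsum (fun w => rsum (fun u => rsum (fun v =>
   pWUV w u v * (ln (PhiVWU w u v * PhiW w) - ln (PhiV v))))) =
   ln 2 * (mi_WU_V PhiW PhiUW PhiVWU - entW PhiW).
Proof.
transitivity (rsum (fun w => rsum (fun u => rsum (fun v =>
   pWUV w u v * (ln (PhiVWU w u v) - ln (PhiV v))))) + rsum (fun w => PhiW w * ln (PhiW w))).
  rewrite -rsum_plus; apply: rsum_ext => w.
  have -> : PhiW w * ln (PhiW w) = rsum (fun u => rsum (fun v => pWUV w u v * ln (PhiW w))).
    rewrite (rsum_ext (g := fun u => PhiW w * ln (PhiW w) * PhiUW w u)); last first.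
      move=> u; rewrite (rsum_ext (g := fun v => PhiW w * ln (PhiW w) * PhiUW w u * PhiVWU w u v)).
        by rewrite rsum_scal; case: (hVWU w u) => _ ->; ring.
      by move=> v; rewrite /Defs.pWUV; ring.
    by rewrite rsum_scal; case: (hUW w) => _ ->; ring.
  rewrite -rsum_plus; apply: rsum_ext => u; rewrite -rsum_plus; apply: rsum_ext => v.
  case: (pWUV_ge0 hW hUW hVWU w u v) => hp; last by rewrite -hp; ring.
  have [h1 [h2 [h3 h4]]] := pWUV_pos hW hUW hVWU hp.
  by rewrite ln_mult //; ring.
by rewrite mean_llr_WU_V mean_log_PhiW; ring.
Qed.

Lemma mean_llr_W_V : rsum (fun w => rsum (fun v =>
   PhiW w * PhiVW w v * (ln (PhiVW w v) - ln (PhiV v)))) = ln 2 * mi_W_V PhiW PhiUW PhiVWU.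
Proof.
rewrite /mi_W_V -rsum_scal; apply: rsum_ext => w; rewrite -rsum_scal; apply: rsum_ext => v.
rewrite pWV_PhiVW //.
have h0 : 0 <= PhiW w * PhiVW w v by apply: Rmult_le_pos; [exact: PhiW_ge0 | exact: PhiVW_ge0].
case: h0 => hp; last by rewrite -hp xlogr_0l; ring.
have hw : 0 < PhiW w by case: (PhiW_ge0 hW w) => // e; rewrite -e in hp; lra.
have hc : 0 < PhiVW w v by case: (PhiVW_ge0 hUW hVWU w v) => // e; rewrite -e in hp; lra.
have hv : 0 < PhiV v.
  apply: Rlt_le_trans hp _; rewrite PhiV_PhiVW.
  apply: (@rsum_term _ (fun w => PhiW w * PhiVW w v) w) => x.
  by apply: Rmult_le_pos; [exact: PhiW_ge0 | exact: PhiVW_ge0].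
rewrite (@xlogr_eq _ _ (PhiVW w v / PhiV v)) //.
- by rewrite ln_div //; ring.
- exact: Rmult_lt_0_compat.
- by field; lra.
- exact: Rdiv_lt_0_compat.
Qed.
End SingleLetter.

Section Exponents.
Variables (W U V : finType) (PhiW : W -> R) (PhiUW : W -> U -> R)
  (PhiVWU : W -> U -> V -> R).
Hypothesis hW : is_pmf PhiW.
Hypothesis hUW : forall w, is_pmf (PhiUW w).
Hypothesis hVWU : forall w u, is_pmf (PhiVWU w u).
Local Notation pWUV := (pWUV PhiW PhiUW PhiVWU).
Local Notation PhiV := (PhiV PhiW PhiUW PhiVWU).
Local Notation PhiVW := (PhiVW PhiUW PhiVWU).

Lemma pWUV_sum : rsum (fun x : W * (U * V) => pWUV x.1 x.2.1 x.2.2) = 1.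
Proof.
rewrite (rsum_triple pWUV); case: hW => _ <-; apply: rsum_ext => w.
transitivity (rsum (fun u => PhiW w * PhiUW w u)).
  apply: rsum_ext => u; case: (hVWU w u) => _ h.
  by rewrite -[RHS]Rmult_1_r -h -rsum_scal; apply: rsum_ext => v; rewrite /Defs.pWUV; ring.
by rewrite rsum_scal; case: (hUW w) => _ ->; ring.
Qed.

Lemma pWV_sum : rsum (fun x : W * V => PhiW x.1 * PhiVW x.1 x.2) = 1.
Proof.
rewrite (rsum_pair (fun w v => PhiW w * PhiVW w v)); case: hW => _ <-; apply: rsum_ext => w.
by rewrite rsum_scal PhiVW_sum //; ring.
Qed.

Lemma joint_exponent_lt1 (a : W -> U -> V -> R) b :
  rsum (fun w => rsum (fun u => rsum (fun v => pWUV w u v * (ln (a w u v) - ln (PhiV v))))) < b ->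
  exists lam, 0 < lam /\ 0 <= rsum (fun w => rsum (fun u => rsum (fun v =>
       pWUV w u v * exp (lam * (ln (a w u v) - ln (PhiV v) - b))))) < 1.
Proof.
move=> hb.
have hp0 (x : W * (U * V)) : 0 <= pWUV x.1 x.2.1 x.2.2 by exact: pWUV_ge0.
have [|lam hlam] := exp_moment_lt1 (y := fun x : W * (U * V) =>
  ln (a x.1 x.2.1 x.2.2) - ln (PhiV x.2.2) - b) hp0 pWUV_sum.
  rewrite (rsum_ext (g := fun x : W * (U * V) => pWUV x.1 x.2.1 x.2.2 *
     (ln (a x.1 x.2.1 x.2.2) - ln (PhiV x.2.2)) + (- b) * pWUV x.1 x.2.1 x.2.2)); last first.
    by move=> x; ring.
  rewrite rsum_plus rsum_scal pWUV_sum.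
  rewrite (rsum_triple (fun w u v => pWUV w u v * (ln (a w u v) - ln (PhiV v)))); lra.
by exists lam; rewrite -(rsum_triple (fun w u v =>
  pWUV w u v * exp (lam * (ln (a w u v) - ln (PhiV v) - b)))).
Qed.

Lemma pair_exponent_lt1 b : ln 2 * mi_W_V PhiW PhiUW PhiVWU < b ->
  exists lam, 0 < lam /\ 0 <= rsum (fun w => rsum (fun v =>
       PhiW w * PhiVW w v * exp (lam * (ln (PhiVW w v) - ln (PhiV v) - b)))) < 1.
Proof.
move=> hb.
have hp0 (x : W * V) : 0 <= PhiW x.1 * PhiVW x.1 x.2.
  by apply: Rmult_le_pos; [exact: PhiW_ge0 | exact: PhiVW_ge0].
have [|lam hlam] := exp_moment_lt1 (y := fun x : W * V =>
  ln (PhiVW x.1 x.2) - ln (PhiV x.2) - b) hp0 pWV_sum.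
  rewrite (rsum_ext (g := fun x : W * V => PhiW x.1 * PhiVW x.1 x.2 *
     (ln (PhiVW x.1 x.2) - ln (PhiV x.2)) + (- b) * (PhiW x.1 * PhiVW x.1 x.2))); last first.
    by move=> x; ring.
  rewrite rsum_plus rsum_scal pWV_sum.
  rewrite (rsum_pair (fun w v => PhiW w * PhiVW w v * (ln (PhiVW w v) - ln (PhiV v)))).
  by rewrite mean_llr_W_V //; lra.
by exists lam; rewrite -(rsum_pair (fun w v =>
  PhiW w * PhiVW w v * exp (lam * (ln (PhiVW w v) - ln (PhiV v) - b)))).
Qed.
End Exponents.

Lemma expected_tv_ge0 (W U V : finType) (PhiW : W -> R) (PhiUW : W -> U -> R)
  (PhiVWU : W -> U -> V -> R) (hW : is_pmf PhiW) (hUW : forall w, is_pmf (PhiUW w)) n M1 M2 :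
  0 <= expected_tv PhiW PhiUW PhiVWU n M1 M2.
Proof.
apply: rsum_ge0 => B1; apply: rsum_ge0 => B2.
apply: Rmult_le_pos; [apply: Rmult_le_pos|].
- by apply: rprod_ge0 => j; exact: pW_ge0.
- by apply: rprod_ge0 => w; apply: rprod_ge0 => k; exact: pU_ge0.
- by apply: Rmult_le_pos; [lra | apply: rsum_ge0 => v; exact: Rabs_pos].
Qed.

Lemma cb_size_ge n Rt : exp (INR n * Rt * ln 2) / 2 <= INR (cb_size n Rt) /\ 1 <= INR (cb_size n Rt).
Proof.
rewrite /cb_size; set x := Rpower 2 (INR n * Rt).
have hx : x = exp (INR n * Rt * ln 2) by [].
rewrite -hx; set z := Int_part x.
have [hz1 hz2] := base_Int_part x; rewrite -/z in hz1 hz2.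
have hm1 : 1 <= INR (Nat.max 1 (Z.to_nat z)).
  by apply: (Rle_trans _ (INR 1)); [rewrite /=; lra | apply: le_INR; exact: Nat.le_max_l].
split => //; case: (Rlt_le_dec x 2) => h2; first lra.
have hz0 : (0 <= z)%Z by apply: le_IZR; lra.
have : IZR z <= INR (Nat.max 1 (Z.to_nat z)).
  rewrite -(Z2Nat.id z hz0) -INR_IZR_INZ Nat2Z.id.
  by apply: le_INR; exact: Nat.le_max_r.
lra.
Qed.

Lemma cb_size_pos n Rt : (0 < cb_size n Rt)%nat.
Proof. by have [_ h] := cb_size_ge n Rt; apply/ltP; apply: INR_lt; rewrite /=; lra. Qed.

Lemma cb_size_div n Rt g :
  / 2 * exp (INR n * (Rt * ln 2 - g)) <= INR (cb_size n Rt) / exp (INR n * g).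
Proof.
have [h _] := cb_size_ge n Rt; have hK := exp_pos (INR n * g).
rewrite (_ : INR n * (Rt * ln 2 - g) = INR n * Rt * ln 2 - INR n * g); last ring.
rewrite /Rminus exp_plus exp_Ropp /Rdiv.
rewrite (_ : / 2 * (exp (INR n * Rt * ln 2) * / exp (INR n * g))
  = exp (INR n * Rt * ln 2) / 2 * / exp (INR n * g)); last by field; lra.
by apply: Rmult_le_compat_r; [exact: Rlt_le (Rinv_0_lt_compat _ hK) | lra].
Qed.

Lemma cb_size_prod_div n R1 R2 g : / 4 * exp (INR n * ((R1 + R2) * ln 2 - g))
  <= INR (cb_size n R1 * cb_size n R2) / exp (INR n * g).
Proof.
have [h1 _] := cb_size_ge n R1; have [h2 _] := cb_size_ge n R2.
have hK := exp_pos (INR n * g).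
have hA1 := exp_pos (INR n * R1 * ln 2); have hA2 := exp_pos (INR n * R2 * ln 2).
rewrite (_ : INR n * ((R1 + R2) * ln 2 - g) = INR n * R1 * ln 2 + INR n * R2 * ln 2 - INR n * g);
  last ring.
rewrite /Rminus !exp_plus exp_Ropp mult_INR.
rewrite (_ : / 4 * (exp (INR n * R1 * ln 2) * exp (INR n * R2 * ln 2) * / exp (INR n * g))
  = exp (INR n * R1 * ln 2) / 2 * (exp (INR n * R2 * ln 2) / 2) * / exp (INR n * g)); last first.
  by field; lra.
apply: Rmult_le_compat_r; first exact: Rlt_le (Rinv_0_lt_compat _ hK).
by apply: Rmult_le_compat => //; lra.
Qed.

Lemma sqrt_div_exp c n g : 0 <= c ->
  sqrt (c / exp (INR n * g)) = sqrt c * exp (- (g / 2) * INR n).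
Proof.
move=> hc; rewrite /Rdiv sqrt_mult_alt //.
congr (_ * _); rewrite -exp_Ropp -[exp (- (g / 2) * INR n)]sqrt_square; last exact: Rlt_le (exp_pos _).
by congr sqrt; rewrite -exp_plus; congr exp; field.
Qed.

Section RateBound.
Variables (W U V : finType) (PhiW : W -> R) (PhiUW : W -> U -> R)
  (PhiVWU : W -> U -> V -> R).
Hypothesis hW : is_pmf PhiW.
Hypothesis hUW : forall w, is_pmf (PhiUW w).
Hypothesis hVWU : forall w u, is_pmf (PhiVWU w u).
Variables (R1 R2 g lA lB lC : R).
Hypotheses (hlA : 0 < lA) (hlB : 0 < lB) (hlC : 0 < lC).
Local Notation pWUV := (pWUV PhiW PhiUW PhiVWU).
Local Notation PhiV := (PhiV PhiW PhiUW PhiVWU).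
Local Notation PhiVW := (PhiVW PhiUW PhiVWU).

Definition rhoA : R := rsum (fun w => rsum (fun u => rsum (fun v => pWUV w u v *
  exp (lA * (ln (PhiVWU w u v) - ln (PhiV v) - ((R1 + R2) * ln 2 - g)))))).
Definition rhoB : R := rsum (fun w => rsum (fun u => rsum (fun v => pWUV w u v *
  exp (lB * (ln (PhiVWU w u v * PhiW w) - ln (PhiV v) - (R2 * ln 2 - g)))))).
Definition rhoC : R := rsum (fun w => rsum (fun v => PhiW w * PhiVW w v *
  exp (lC * (ln (PhiVW w v) - ln (PhiV v) - (R1 * ln 2 - g))))).

(* With K = exp (n g), the one-shot bound and the Chernoff bounds give, for
   every n, a sum of terms decaying like exp (-n g / 2) or rho^n. *)
Lemma expected_tv_rate_bound n :
  expected_tv PhiW PhiUW PhiVWU n (cb_size n R1) (cb_size n R2) <=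
  / 2 * ((sqrt 2 + 1) * exp (- (g / 2) * INR n)
         + 2 * (exp (- lA * ln (/ 4)) * rhoA ^ n + exp (- lB * ln (/ 2)) * rhoB ^ n)
         + 2 * (exp (- lC * ln (/ 2)) * rhoC ^ n)).
Proof.
have hK := exp_pos (INR n * g).
have T := expected_tv_le hW hUW hVWU n (cb_size_pos n R1) (cb_size_pos n R2) hK.
rewrite !sqrt_div_exp ?sqrt_1 in T; try lra.
have q4 : 0 < / 4 by lra.
have q2 : 0 < / 2 by lra.
have BA := GamA_mass_le hW hUW hVWU n hK (cb_size_prod_div n R1 R2 g) (cb_size_div n R2 g).
have BC := GamWA_mass_le hW hUW hVWU n hK (cb_size_div n R1 g).
have posA w u v : 0 < pWUV w u v -> 0 < PhiVWU w u v.
  by move/(pWUV_pos hW hUW hVWU); tauto.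
have posB w u v : 0 < pWUV w u v -> 0 < PhiVWU w u v * PhiW w.
  by move/(pWUV_pos hW hUW hVWU) => [hw [_ [hv _]]]; exact: Rmult_lt_0_compat.
have chA := atypical_joint_mass_le hW hUW hVWU (n := n) (F := @Gam _ _ _ PhiVWU n)
  ((R1 + R2) * ln 2 - g) posA (fun _ _ _ => erefl) q4 hlA.
have chB := atypical_joint_mass_le hW hUW hVWU (n := n)
  (F := fun w u v => Gam PhiVWU (n := n) w u v * pW PhiW w) (R2 * ln 2 - g)
  posB (fun w u v => esym (rprod_mult _ _)) q2 hlB.
have chC := atypical_pair_mass_le hW hUW hVWU n (R1 * ln 2 - g) q2 hlC.
rewrite -/rhoA in chA; rewrite -/rhoB in chB; rewrite -/rhoC in chC.
apply: Rle_trans T _; apply: Rmult_le_compat_l; first lra.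
rewrite -Rmult_plus_distr_r.
apply: Rplus_le_compat; first apply: Rplus_le_compat_l.
  by apply: Rmult_le_compat_l; [lra | exact: Rle_trans BA (Rplus_le_compat _ _ _ _ chA chB)].
by apply: Rmult_le_compat_l; [lra | exact: Rle_trans BC chC].
Qed.
End RateBound.

Lemma common_margin a b c : 0 < a -> 0 < b -> 0 < c ->
  exists g, 0 < g /\ g < a /\ g < b /\ g < c.
Proof.
move=> ha hb hc; exists (Rmin a (Rmin b c) / 2).
have := Rmin_l a (Rmin b c); have := Rmin_r a (Rmin b c).
have := Rmin_l b c; have := Rmin_r b c; have := Rmin_pos _ _ ha (Rmin_pos _ _ hb hc).
lra.
Qed.

Theorem mainTheorem16 (W U V : finType) (PhiW : W -> R) (PhiUW : W -> U -> R)
  (PhiVWU : W -> U -> V -> R)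
  (hW : is_pmf PhiW)
  (hUW : forall w, is_pmf (PhiUW w))
  (hVWU : forall w u, is_pmf (PhiVWU w u))
  (R1 R2 : R)
  (h1 : R1 > mi_W_V PhiW PhiUW PhiVWU)
  (h2 : R2 > mi_WU_V PhiW PhiUW PhiVWU - entW PhiW)
  (h3 : R1 + R2 > mi_WU_V PhiW PhiUW PhiVWU) :
  let E := fun n : nat =>
    expected_tv PhiW PhiUW PhiVWU n (cb_size n R1) (cb_size n R2) in
  Un_cv E 0 /\
  exists c C : R, 0 < c /\ forall n : nat, E n <= C * exp (- c * INR n).
Proof.
move=> E; have hl := ln2_pos.
(* a margin g below the three rate gaps, measured in nats *)
have [g [hg [g1 [g2 g3]]]] := common_margin
  (Rmult_lt_0_compat (R1 - mi_W_V PhiW PhiUW PhiVWU) _ ltac:(lra) hl)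
  (Rmult_lt_0_compat (R2 - (mi_WU_V PhiW PhiUW PhiVWU - entW PhiW)) _ ltac:(lra) hl)
  (Rmult_lt_0_compat (R1 + R2 - mi_WU_V PhiW PhiUW PhiVWU) _ ltac:(lra) hl).
have [lA [hlA hrA]] := joint_exponent_lt1 hW hUW hVWU (a := PhiVWU) (b := (R1 + R2) * ln 2 - g)
  ltac:(rewrite mean_llr_WU_V //; lra).
have [lB [hlB hrB]] := joint_exponent_lt1 hW hUW hVWU
  (a := fun w u v => PhiVWU w u v * PhiW w) (b := R2 * ln 2 - g)
  ltac:(rewrite mean_llr_WU_V_joint //; lra).
have [lC [hlC hrC]] := pair_exponent_lt1 hW hUW hVWU (b := R1 * ln 2 - g)
  ltac:(lra).
have hsmall : exp_small E.
  apply: exp_small_le (expected_tv_rate_bound hW hUW hVWU R1 R2 g hlA hlB hlC) _.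
  apply: exp_small_scal; first lra.
  apply: exp_small_plus; [apply: exp_small_plus|].
  - by apply: exp_small_scal; [have := sqrt_pos 2; lra | apply: exp_small_exp; lra].
  - apply: exp_small_scal; first lra.
    by apply: exp_small_plus; apply: exp_small_scal; try apply: exp_small_pow;
      try exact: Rlt_le (exp_pos _).
  - by apply: exp_small_scal; [lra | apply: exp_small_scal; [exact: Rlt_le (exp_pos _) |
      exact: exp_small_pow]].
split; last exact: hsmall.
by apply: exp_small_cv hsmall => n; exact: expected_tv_ge0.
Qed.
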